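(* Let $(\mu,\mathcal{S},L,\pi)$ (continuous time) and $(\mu,\mathcal{S},K,\pi)$ (discrete time) be irreducible, reversible finite Markov chains, $T_2(\mu,\cdot)$ the $L^2$-mixing time, and $\alpha(c)=\sqrt{\tau(c)\lambda_{j(c)}}$. (1) Continuous time: for $0<c<\pi(|\mu/\pi|^2)-1$ and $A>0$, \[\frac{\alpha(c)}{\alpha(c)+A}T_2\Big(\mu,\sqrt{c+\tfrac{A+\alpha(c)}{Ae^{\alpha(c)A}}}\Big)\le\tau(c)\le T_2\Big(\mu,\sqrt{\tfrac{c}{1+c}}\Big),\] and for $0<\epsilon<\sqrt{[\pi(|\mu/\pi-1|^2)\wedge1]/2}$, $\tau(2\epsilon^2)\le T_2(\mu,\epsilon)\le\frac{6}{\epsilon^4}\tau(\epsilon^2/2)$. (2) Discrete time: for $0<c<\pi(|\mu/\pi|^2)-1$ and $A>0$, \[\frac{\alpha(c)}{\alpha(c)+A}\Big(T_2\Big(\mu,\sqrt{c+\tfrac{A+\alpha(c)}{Ae^{\alpha(c)A}}}\Big)-1\Big)\le\tau(c)\le T_2\Big(\mu,\sqrt{\tfrac{c}{1+c}}\Big),\] and for $0<\epsilon<\sqrt{[\pi(|\mu/\pi-1|^2)\wedge1]/2}$, $\tau(2\epsilon^2)\le T_2(\mu,\epsilon)\le\frac{6}{\epsilon^4}\tau(\epsilon^2/2)+1$.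
   Context: $L^2$-distance: continuous time $d_2(\mu,t)=\|\mu e^{tL}/\pi-1\|_{L^2(\pi)}$, discrete time $d_2(\mu,m)=\|\mu K^m/\pi-1\|_{L^2(\pi)}$ ($m$ integer), where $\|f\|_{L^2(\pi)}^2=\sum_y|f(y)|^2\pi(y)$; $T_2(\mu,\epsilon)=\min\{t\ge0:d_2(\mu,t)\le\epsilon\}$ (integer $t$ in discrete time); $\pi(|f|^2)=\sum_y|f(y)|^2\pi(y)$. Continuous time: $0=\lambda_0<\lambda_1\le\dots\le\lambda_{|\mathcal{S}|-1}$ eigenvalues of $-L$ with $L^2(\pi)$-orthonormal right eigenvectors $\phi_0=\mathbf1,\phi_1,\dots$. Discrete time: eigenvalues $\beta_0=1,\beta_1,\dots$ of $K$ with $|\beta_1|\ge|\beta_2|\ge\cdots$, orthonormal eigenvectors $\phi_i$, and $\lambda_i:=-\log|\beta_i|$ ($-\log0=\infty$, $1/\infty=0$). In both cases $\mu(\phi)=\sum_x\mu(x)\phi(x)$, $j(c)=\min\{j\ge1:\sum_{i=1}^j|\mu(\phi_i)|^2>c\}$, $\tau(c)=\max_{j\ge j(c)}\frac{\log(1+\sum_{i=1}^j|\mu(\phi_i)|^2)}{2\lambda_j}$. *)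

From Stdlib Require Import Reals Lra Arith Factorial ClassicalEpsilon.
Open Scope R_scope.

(* State space S = {0,...,n-1}; vectors are nat -> R, matrices nat -> nat -> R
   (only entries with indices < n matter). *)

Fixpoint rsum (n : nat) (f : nat -> R) : R :=
  match n with O => 0 | S k => rsum k f + f k end.

Definition matmul (n : nat) (A B : nat -> nat -> R) : nat -> nat -> R :=
  fun x y => rsum n (fun z => A x z * B z y).

Fixpoint matpow (n : nat) (A : nat -> nat -> R) (k : nat) : nat -> nat -> R :=
  match k with
  | O => fun x y => if Nat.eqb x y then 1 else 0
  | S k' => matmul n (matpow n A k') A
  end.

Definition is_prob (n : nat) (p : nat -> R) : Prop :=
  (forall x, (x < n)%nat -> 0 <= p x) /\ rsum n p = 1.
Definition is_pos_prob (n : nat) (p : nat -> R) : Prop :=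
  (forall x, (x < n)%nat -> 0 < p x) /\ rsum n p = 1.

Definition is_generator (n : nat) (L : nat -> nat -> R) : Prop :=
  (forall x y, (x < n)%nat -> (y < n)%nat -> x <> y -> 0 <= L x y) /\
  (forall x, (x < n)%nat -> rsum n (L x) = 0).
Definition is_stochastic (n : nat) (K : nat -> nat -> R) : Prop :=
  (forall x y, (x < n)%nat -> (y < n)%nat -> 0 <= K x y) /\
  (forall x, (x < n)%nat -> rsum n (K x) = 1).

Inductive reach (n : nat) (Q : nat -> nat -> R) : nat -> nat -> Prop :=
| reach_refl x : reach n Q x x
| reach_step x z y : (z < n)%nat -> 0 < Q x z -> reach n Q z y -> reach n Q x y.
Definition irreducible (n : nat) (Q : nat -> nat -> R) : Prop :=
  forall x y, (x < n)%nat -> (y < n)%nat -> reach n Q x y.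

Definition reversible (n : nat) (pi : nat -> R) (Q : nat -> nat -> R) : Prop :=
  forall x y, (x < n)%nat -> (y < n)%nat -> pi x * Q x y = pi y * Q y x.

(* matrix exponential e^{tL} = sum_k t^k L^k / k! (the series converges) *)
Definition mexp (n : nat) (L : nat -> nat -> R) (t : R) : nat -> nat -> R :=
  fun x y => epsilon (inhabits 0) (fun l =>
    Un_cv (fun N => sum_f_R0 (fun k => t ^ k / INR (fact k) * matpow n L k x y) N) l).

Definition l2norm (n : nat) (pi : nat -> R) (f : nat -> R) : R :=
  sqrt (rsum n (fun y => (f y) ^ 2 * pi y)).

Definition pisq (n : nat) (pi f : nat -> R) : R := rsum n (fun y => (f y) ^ 2 * pi y).

Definition d2_cont (n : nat) (L : nat -> nat -> R) (pi mu : nat -> R) (t : R) : R :=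
  l2norm n pi (fun y => rsum n (fun x => mu x * mexp n L t x y) / pi y - 1).
Definition d2_disc (n : nat) (K : nat -> nat -> R) (pi mu : nat -> R) (m : nat) : R :=
  l2norm n pi (fun y => rsum n (fun x => mu x * matpow n K m x y) / pi y - 1).

(* extended nonnegative reals (for possibly infinite quantities in discrete time) *)
Inductive ER : Type := Fin (r : R) | PInf.
Definition ERle (a b : ER) : Prop :=
  match a, b with
  | Fin x, Fin y => x <= y
  | _, PInf => True
  | PInf, Fin _ => False
  end.
Definition ermax (a b : ER) : ER :=
  match a, b with Fin x, Fin y => Fin (Rmax x y) | _, _ => PInf end.
(* product with convention 0 * oo = 0 (used for factors >= 0) *)
Definition ermul (a b : ER) : ER :=
  match a, b with
  | Fin x, Fin y => Fin (x * y)
  | Fin x, PInf | PInf, Fin x => if Req_EM_T x 0 then Fin 0 else PInf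
  | PInf, PInf => PInf
  end.
Definition ersqrt (a : ER) : ER := match a with Fin x => Fin (sqrt x) | PInf => PInf end.
Definition eradd (a : ER) (r : R) : ER := match a with Fin x => Fin (x + r) | PInf => PInf end.

Definition T2c (d : R -> R) (eps : R) : R :=
  epsilon (inhabits 0) (fun T =>
    0 <= T /\ d T <= eps /\ forall t, 0 <= t -> d t <= eps -> T <= t).
(* discrete time: integer t, = +oo if the set is empty *)
Definition T2d (d : nat -> R) (eps : R) : ER :=
  epsilon (inhabits PInf) (fun T =>
    match T with
    | Fin t => exists m : nat, t = INR m /\ d m <= eps /\
                 forall k : nat, d k <= eps -> (m <= k)%nat
    | PInf => forall k : nat, eps < d k
    end).

Definition muphi (n : nat) (mu : nat -> R) (phi : nat -> nat -> R) (i : nat) : R :=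
  rsum n (fun x => mu x * phi i x).
(* Ssum j = sum_{i=1}^j |mu(phi_i)|^2 *)
Definition Ssum (n : nat) (mu : nat -> R) (phi : nat -> nat -> R) (j : nat) : R :=
  rsum j (fun i => (muphi n mu phi (S i)) ^ 2).

Fixpoint lfind (P : nat -> bool) (m : nat) : option nat :=
  match m with
  | O => None
  | S k => match lfind P k with
           | Some j => Some j
           | None => if P (S k) then Some (S k) else None
           end
  end.

(* j(c) = min { 1 <= j <= n-1 : Ssum j > c } (default n if no such j) *)
Definition jidx (n : nat) (mu : nat -> R) (phi : nat -> nat -> R) (c : R) : nat :=
  match lfind (fun j => if Rlt_dec c (Ssum n mu phi j) then true else false) (n - 1) with
  | Some j => j
  | None => n
  end.

Fixpoint rmaxr (f : nat -> R) (a k : nat) : R :=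
  match k with O => f a | S k' => Rmax (rmaxr f a k') (f (a + S k')%nat) end.
Fixpoint ermaxr (f : nat -> ER) (a k : nat) : ER :=
  match k with O => f a | S k' => ermax (ermaxr f a k') (f (a + S k')%nat) end.

Definition tau_c (n : nat) (mu : nat -> R) (phi : nat -> nat -> R) (lam : nat -> R) (c : R) : R :=
  let j0 := jidx n mu phi c in
  rmaxr (fun j => ln (1 + Ssum n mu phi j) / (2 * lam j)) j0 (n - 1 - j0).

Definition alpha_c (n : nat) (mu : nat -> R) (phi : nat -> nat -> R) (lam : nat -> R) (c : R) : R :=
  sqrt (tau_c n mu phi lam c * lam (jidx n mu phi c)).

(* discrete time: lambda_i = - log |beta_i|, with -log 0 = +oo *)
Definition lam_d (beta : nat -> R) (i : nat) : ER :=
  if Req_EM_T (beta i) 0 then PInf else Fin (- ln (Rabs (beta i))).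

(* x / (2 l) with 1/oo = 0 and x/0 = +oo (x > 0 in the relevant range) *)
Definition erterm (x : R) (l : ER) : ER :=
  match l with
  | PInf => Fin 0
  | Fin y => if Req_EM_T y 0 then PInf else Fin (x / (2 * y))
  end.

Definition tau_d (n : nat) (mu : nat -> R) (phi : nat -> nat -> R) (beta : nat -> R) (c : R) : ER :=
  let j0 := jidx n mu phi c in
  ermaxr (fun j => erterm (ln (1 + Ssum n mu phi j)) (lam_d beta j)) j0 (n - 1 - j0).

Definition alpha_d (n : nat) (mu : nat -> R) (phi : nat -> nat -> R) (beta : nat -> R) (c : R) : ER :=
  ersqrt (ermul (tau_d n mu phi beta c) (lam_d beta (jidx n mu phi c))).

(* alpha/(alpha+A) and sqrt(c + (A+alpha)/(A e^{alpha A})), extended by their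
   limits at alpha = +oo *)
Definition coefE (A : R) (al : ER) : R :=
  match al with Fin a => a / (a + A) | PInf => 1 end.
Definition epsargE (c A : R) (al : ER) : R :=
  match al with Fin a => sqrt (c + (A + a) / (A * exp (a * A))) | PInf => sqrt c end.

Definition eigen_c (n : nat) (L : nat -> nat -> R) (pi : nat -> R)
  (lam : nat -> R) (phi : nat -> nat -> R) : Prop :=
  (forall i x, (i < n)%nat -> (x < n)%nat ->
     rsum n (fun y => L x y * phi i y) = - lam i * phi i x) /\
  (forall i k, (i < n)%nat -> (k < n)%nat ->
     rsum n (fun x => phi i x * phi k x * pi x) = if Nat.eqb i k then 1 else 0) /\
  lam 0%nat = 0 /\ (forall x, (x < n)%nat -> phi 0%nat x = 1) /\
  ((1 < n)%nat -> 0 < lam 1%nat) /\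
  (forall i, (1 <= i)%nat -> (S i < n)%nat -> lam i <= lam (S i)).

Definition eigen_d (n : nat) (K : nat -> nat -> R) (pi : nat -> R)
  (beta : nat -> R) (phi : nat -> nat -> R) : Prop :=
  (forall i x, (i < n)%nat -> (x < n)%nat ->
     rsum n (fun y => K x y * phi i y) = beta i * phi i x) /\
  (forall i k, (i < n)%nat -> (k < n)%nat ->
     rsum n (fun x => phi i x * phi k x * pi x) = if Nat.eqb i k then 1 else 0) /\
  beta 0%nat = 1 /\ (forall x, (x < n)%nat -> phi 0%nat x = 1) /\
  (forall i, (1 <= i)%nat -> (S i < n)%nat -> Rabs (beta (S i)) <= Rabs (beta i)).

From Stdlib Require Import Reals Lra Lia Psatz ZArith Factorial.
From Stdlib Require Import Classical ClassicalEpsilon FunctionalExtensionality.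
From Coquelicot Require Coquelicot.
Open Scope R_scope.

(* In the orthonormal eigenbasis, [d2(mu, t) ^ 2 = sum_i mu(phi_i) ^ 2 exp (- 2 lam_i t)]
   (with [|beta_i| ^ (2 t)] in discrete time), so everything reduces to this explicit profile.
   Lower bound on the mixing time: by time [T] the first [j] modes alone still contribute
   [S_j exp (- 2 lam_j T)], with [S_j = sum_(i <= j) mu(phi_i) ^ 2]; if this is at most
   [c / (1 + c) < S_j / (1 + S_j)] then [T > log (1 + S_j) / (2 lam_j)].
   Upper bound: the modes below [j(c)] contribute at most [c], and for the remaining ones
   the definition of [tau] gives [1 + S_j <= exp (2 lam_j tau)]; an Abel summation with the
   concavity of [x |-> 1 - exp (- d x)] bounds their contribution at time [t > tau] by
   [t / (t - tau) * exp (- 2 lam_(j c) (t - tau))]. Choosing [t = tau (alpha + A) / alpha],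
   resp. [t = 6 tau / eps ^ 4], gives the stated bounds; in discrete time the rates are
   [- log |beta_i|], vanishing eigenvalues truncate the sum, and rounding [t] up to an
   integer costs [1]. *)

Lemma rsum_ext n f g : (forall i, (i < n)%nat -> f i = g i) -> rsum n f = rsum n g.
Proof. induction n; simpl; intros H; auto. rewrite IHn by (intros; apply H; lia). rewrite H by lia; auto. Qed.

Lemma rsum_plus n f g : rsum n (fun i => f i + g i) = rsum n f + rsum n g.
Proof. induction n; simpl; [lra|]. rewrite IHn; lra. Qed.

Lemma rsum_minus n f g : rsum n (fun i => f i - g i) = rsum n f - rsum n g.
Proof. induction n; simpl; [lra|]. rewrite IHn; lra. Qed.

Lemma rsum_scal_l n c f : rsum n (fun i => c * f i) = c * rsum n f.
Proof. induction n; simpl; [lra|]. rewrite IHn; lra. Qed.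

Lemma rsum_scal_r n c f : rsum n (fun i => f i * c) = rsum n f * c.
Proof. induction n; simpl; [lra|]. rewrite IHn; lra. Qed.

Lemma rsum_const n c : rsum n (fun _ => c) = INR n * c.
Proof. induction n; simpl; [lra|]. rewrite IHn. destruct n; simpl; lra. Qed.

Lemma rsum_comm n m (f : nat -> nat -> R) :
  rsum n (fun i => rsum m (fun j => f i j)) = rsum m (fun j => rsum n (fun i => f i j)).
Proof.
  induction n; simpl.
  - induction m; simpl; auto. rewrite <- IHm; lra.
  - rewrite IHn, <- rsum_plus. auto.
Qed.

Lemma rsum_mult n m f g :
  rsum n f * rsum m g = rsum n (fun i => rsum m (fun j => f i * g j)).
Proof. rewrite <- rsum_scal_r. apply rsum_ext; intros. rewrite <- rsum_scal_l. auto. Qed.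

Lemma rsum_shift n f : rsum (S n) f = f 0%nat + rsum n (fun i => f (S i)).
Proof. induction n; simpl in *; [lra|]. rewrite IHn. lra. Qed.

Lemma rsum_split a b f : rsum (a + b) f = rsum a f + rsum b (fun i => f (a + i)%nat).
Proof. induction b; simpl. rewrite Nat.add_0_r; lra. rewrite Nat.add_succ_r. simpl. rewrite IHb. lra. Qed.

Lemma rsum_kronecker n f y : (y < n)%nat ->
  rsum n (fun z => f z * (if Nat.eqb z y then 1 else 0)) = f y.
Proof.
  induction n; simpl; intros Hy; [lia|].
  destruct (Nat.eq_dec y n).
  - subst. rewrite Nat.eqb_refl, (rsum_ext _ _ (fun _ => 0)), rsum_const; [lra|].
    intros i Hi. destruct (Nat.eqb_spec i n); [lia|lra].
  - rewrite IHn by lia. destruct (Nat.eqb_spec n y); [lia|lra].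
Qed.

Lemma rsum_le n f g : (forall i, (i < n)%nat -> f i <= g i) -> rsum n f <= rsum n g.
Proof. induction n; simpl; intros H; [lra|]. specialize (IHn (fun i Hi => H i ltac:(lia))). specialize (H n ltac:(lia)). lra. Qed.

Lemma rsum_nonneg n f : (forall i, (i < n)%nat -> 0 <= f i) -> 0 <= rsum n f.
Proof. intros H. replace 0 with (rsum n (fun _ => 0)) by (rewrite rsum_const; lra). apply rsum_le; auto. Qed.

Lemma rsum_lt n f g : (forall i, (i < n)%nat -> f i <= g i) ->
  (exists i, (i < n)%nat /\ f i < g i) -> rsum n f < rsum n g.
Proof.
  induction n; simpl; intros H [i [Hi Hlt]]; [lia|].
  destruct (Nat.eq_dec i n).
  - subst. pose proof (rsum_le n f g (fun j Hj => H j ltac:(lia))). lra.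
  - assert (rsum n f < rsum n g) by (apply IHn; [intros; apply H; lia| exists i; split; auto; lia]).
    specialize (H n ltac:(lia)). lra.
Qed.

Lemma rsum_nonneg_eq0 n f : (forall i, (i < n)%nat -> 0 <= f i) -> rsum n f = 0 ->
  forall i, (i < n)%nat -> f i = 0.
Proof.
  induction n; simpl; intros H0 Hs i Hi; [lia|].
  pose proof (rsum_nonneg n f (fun j Hj => H0 j ltac:(lia))).
  pose proof (H0 n ltac:(lia)).
  destruct (Nat.eq_dec i n). subst; lra.
  apply IHn; [intros; apply H0; lia | lra | lia].
Qed.

Lemma rsum_prefix_le N j f : (j <= N)%nat -> (forall i, (i < N)%nat -> 0 <= f i) -> rsum j f <= rsum N f.
Proof.
  intros Hj Hf. replace N with (j + (N - j))%nat by lia. rewrite rsum_split.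
  assert (0 <= rsum (N - j) (fun i => f (j + i)%nat)) by (apply rsum_nonneg; intros; apply Hf; lia). lra.
Qed.

Lemma rsum_abs n f : Rabs (rsum n f) <= rsum n (fun i => Rabs (f i)).
Proof. induction n; simpl. rewrite Rabs_R0; lra. eapply Rle_trans. apply Rabs_triang. lra. Qed.

Lemma sum_f_R0_rsum m (g : nat -> nat -> R) N :
  sum_f_R0 (fun k => rsum m (fun i => g i k)) N = rsum m (fun i => sum_f_R0 (g i) N).
Proof. induction N; simpl; auto. rewrite IHN, <- rsum_plus. auto. Qed.

Lemma Un_cv_ext u v l : (forall N, u N = v N) -> Un_cv u l -> Un_cv v l.
Proof. intros H Hu e He. destruct (Hu e He) as [N HN]. exists N. intros. rewrite <- H. auto. Qed.

Lemma Un_cv_const c : Un_cv (fun _ => c) c.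
Proof. intros e He. exists 0%nat. intros. unfold R_dist. rewrite Rminus_diag, Rabs_R0. auto. Qed.

Lemma Un_cv_rsum m (u : nat -> nat -> R) (l : nat -> R) :
  (forall i, (i < m)%nat -> Un_cv (u i) (l i)) ->
  Un_cv (fun N => rsum m (fun i => u i N)) (rsum m l).
Proof.
  induction m; intros H; simpl.
  - apply Un_cv_const.
  - apply CV_plus. apply IHm; intros; apply H; lia. apply H; lia.
Qed.

Lemma exp_le x y : x <= y -> exp x <= exp y.
Proof. intros [H|H]; [left; apply exp_increasing; auto| subst; lra]. Qed.

Lemma ln_le x y : 0 < x -> x <= y -> ln x <= ln y.
Proof. intros Hx [H|H]; [left; apply ln_increasing; auto| subst; lra]. Qed.

Lemma le_exp_of_ln_le x y : 0 < x -> ln x <= y -> x <= exp y.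
Proof. intros Hx H. rewrite <- (exp_ln x Hx). apply exp_le; auto. Qed.

Lemma Rdiv_nonneg a b : 0 <= a -> 0 < b -> 0 <= a / b.
Proof. intros; apply Rmult_le_pos; auto; left; apply Rinv_0_lt_compat; auto. Qed.

Lemma ln_1p_ge c : 0 <= c -> c / (1 + c) <= ln (1 + c).
Proof.
  intros Hc. set (z := c / (1 + c)).
  assert (H1 := exp_ineq1_le (- z)).
  assert (Hz : 1 - z = / (1 + c)) by (unfold z; field; lra).
  assert (exp z <= 1 + c).
  { assert (0 < exp z) by apply exp_pos.
    assert (E : exp z * exp (- z) = 1) by (rewrite <- exp_plus; replace (z + - z) with 0 by ring; apply exp_0).
    assert (exp z * (1 - z) <= 1) by (rewrite <- E; apply Rmult_le_compat_l; lra).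
    rewrite Hz in H0. apply Rmult_le_reg_r with (/ (1 + c)). apply Rinv_0_lt_compat; lra.
    rewrite Rinv_r by lra. lra. }
  rewrite <- (ln_exp z). apply ln_le; auto. apply exp_pos.
Qed.

Lemma sqrt_le_iff x e : 0 <= x -> 0 < e -> (sqrt x <= e <-> x <= e ^ 2).
Proof.
  intros Hx He. split; intros H.
  - assert (0 <= sqrt x) by apply sqrt_pos. rewrite <- (sqrt_sqrt x Hx). nra.
  - rewrite <- (sqrt_pow2 e) by lra. apply sqrt_le_1_alt. auto.
Qed.

Lemma pow2_lt_of_lt_sqrt e x : 0 < e -> e < sqrt x -> e ^ 2 < x.
Proof.
  intros He H. destruct (Rle_dec x 0) as [Hx|Hx].
  - rewrite sqrt_neg_0 in H by auto. lra.
  - rewrite <- (sqrt_sqrt x) by lra. assert (0 <= sqrt x) by apply sqrt_pos. nra.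
Qed.

Lemma chain_le (f : nat -> R) N : (forall j, (1 <= j)%nat -> (S j <= N)%nat -> f j <= f (S j)) ->
  forall i j, (1 <= i)%nat -> (i <= j)%nat -> (j <= N)%nat -> f i <= f j.
Proof.
  intros H i j Hi Hij HjN. induction j; [lia|].
  destruct (Nat.eq_dec i (S j)). subst; lra.
  assert (f i <= f j) by (apply IHj; lia). specialize (H j ltac:(lia) HjN). lra.
Qed.

(* [x |-> 1 - exp (- d x)] is concave and vanishes at [0], so its slope from the origin decreases.
   Coquelicot is imported only inside this module, for [auto_derive]. *)
Module ExpChord.
Import Coquelicot.Coquelicot.
Lemma exp_chord_le d s t : 0 <= d -> 0 < s -> s <= t ->
  s * (1 - exp (- (d * t))) <= t * (1 - exp (- (d * s))).
Proof.
  intros Hd Hs Hst.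
  destruct (Req_dec s t) as [<-|Hne]; [lra|].
  set (h := fun x => x * (1 - exp (- (d * s))) - s * (1 - exp (- (d * x)))).
  assert (Hder : forall c, s <= c <= t ->
    derivable_pt_lim h c ((1 - exp (- (d * s))) - s * (d * exp (- (d * c))))).
  { intros c Hc. apply is_derive_Reals. unfold h. auto_derive; auto. ring. }
  destruct (MVT_cor2 h _ s t ltac:(lra) Hder) as [c [Hc1 Hc2]].
  assert (0 <= (1 - exp (- (d * s))) - s * (d * exp (- (d * c)))).
  { assert (exp (- (d * c)) <= exp (- (d * s))) by (apply exp_le; nra).
    assert (H1 := exp_ineq1_le (d * s)).
    assert (H2 : exp (- (d * s)) * exp (d * s) = 1)
      by (rewrite <- exp_plus; replace (- (d * s) + d * s) with 0 by ring; apply exp_0).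
    assert (0 < exp (- (d * s))) by apply exp_pos.
    assert (s * d * exp (- (d * c)) <= s * d * exp (- (d * s))) by (apply Rmult_le_compat_l; nra).
    assert (0 <= exp (- (d * s)) * (exp (d * s) - 1 - d * s)) by (apply Rmult_le_pos; lra).
    nra. }
  assert (0 <= ((1 - exp (- (d * s))) - s * (d * exp (- (d * c)))) * (t - s)) by (apply Rmult_le_pos; lra).
  unfold h in Hc1. lra.
Qed.
End ExpChord.
Import ExpChord.

Lemma exp_tail_step (P x y tau t : R) : 0 <= tau -> tau < t -> x <= y -> 0 <= P -> P <= exp (x * tau) ->
  P * exp (- x * t) <= t / (t - tau) * (exp (- x * (t - tau)) - exp (- y * (t - tau))) + P * exp (- y * t).
Proof.
  intros Htau Ht Hxy HP HPe. set (s := t - tau). set (d := y - x).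
  assert (Hs : 0 < s) by (unfold s; lra).
  assert (E1 : exp (x * tau) * exp (- x * t) = exp (- x * s)) by (rewrite <- exp_plus; f_equal; unfold s; ring).
  assert (E2 : exp (x * tau) * exp (- y * t) = exp (- x * s) * exp (- (d * t)))
    by (rewrite <- !exp_plus; f_equal; unfold s, d; ring).
  assert (E3 : exp (- y * s) = exp (- x * s) * exp (- (d * s))) by (rewrite <- !exp_plus; f_equal; unfold d; ring).
  assert (Hdiff : exp (- y * t) <= exp (- x * t)) by (apply exp_le; nra).
  assert (H1 : P * (exp (- x * t) - exp (- y * t)) <= exp (x * tau) * (exp (- x * t) - exp (- y * t)))
    by (apply Rmult_le_compat_r; lra).
  assert (HB := exp_chord_le d s t ltac:(unfold d; lra) Hs ltac:(unfold s; lra)).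
  assert (HB' : 1 - exp (- (d * t)) <= t / s * (1 - exp (- (d * s)))).
  { apply Rmult_le_reg_l with s; auto. unfold Rdiv.
    replace (s * (t * / s * (1 - exp (- (d * s))))) with (t * (1 - exp (- (d * s)))) by (field; lra). lra. }
  assert (Hpos := exp_pos (- x * s)).
  assert (H3 : exp (- x * s) * (1 - exp (- (d * t))) <= exp (- x * s) * (t / s * (1 - exp (- (d * s)))))
    by (apply Rmult_le_compat_l; lra).
  rewrite E3. fold s.
  assert (exp (x * tau) * (exp (- x * t) - exp (- y * t)) = exp (- x * s) * (1 - exp (- (d * t)))).
  { rewrite Rmult_minus_distr_l, E1, E2. ring. }
  nra.
Qed.

(* Abel summation: the accumulated mass [Q + q 0 + ... + q k] is pushed from rate [u k] to
   rate [u (S k)] at the telescoping cost given by [exp_tail_step]. *)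
Lemma exp_tail_sum_telescope (u q : nat -> R) (Q tau t : R) m :
  0 <= tau -> tau < t -> 0 <= Q -> (forall k, (k <= m)%nat -> 0 <= q k) ->
  (forall k, (k < m)%nat -> u k <= u (S k)) ->
  (forall k, (k <= m)%nat -> Q + rsum (S k) q <= exp (u k * tau)) ->
  rsum (S m) (fun k => q k * exp (- u k * t)) <=
   t / (t - tau) * (exp (- u 0%nat * (t - tau)) - exp (- u m * (t - tau)))
   + (Q + rsum (S m) q) * exp (- u m * t).
Proof.
  intros Htau Ht HQ Hq Hu HP. induction m.
  - simpl. specialize (Hq 0%nat (le_n _)). assert (0 < exp (- u 0%nat * t)) by apply exp_pos.
    rewrite Rminus_diag, Rmult_0_r. nra.
  - assert (IH := IHm (fun k Hk => Hq k ltac:(lia)) (fun k Hk => Hu k ltac:(lia)) (fun k Hk => HP k ltac:(lia))).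
    change (rsum (S (S m)) (fun k => q k * exp (- u k * t))) with
       (rsum (S m) (fun k => q k * exp (- u k * t)) + q (S m) * exp (- u (S m) * t)).
    change (rsum (S (S m)) q) with (rsum (S m) q + q (S m)).
    assert (Hnn : 0 <= Q + rsum (S m) q)
      by (pose proof (rsum_nonneg (S m) q (fun k Hk => Hq k ltac:(lia))); lra).
    assert (Hst := exp_tail_step (Q + rsum (S m) q) (u m) (u (S m)) tau t Htau Ht (Hu m ltac:(lia)) Hnn (HP m ltac:(lia))).
    lra.
Qed.

Lemma exp_tail_sum_le (u q : nat -> R) (Q tau t : R) m :
  0 <= tau -> tau < t -> 0 <= Q -> (forall k, (k <= m)%nat -> 0 <= q k) ->
  (forall k, (k < m)%nat -> u k <= u (S k)) ->
  (forall k, (k <= m)%nat -> Q + rsum (S k) q <= exp (u k * tau)) ->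
  rsum (S m) (fun k => q k * exp (- u k * t)) <= t / (t - tau) * exp (- u 0%nat * (t - tau)).
Proof.
  intros Htau Ht HQ Hq Hu HP.
  assert (H := exp_tail_sum_telescope u q Q tau t m Htau Ht HQ Hq Hu HP).
  assert (Hr : 1 <= t / (t - tau))
    by (apply Rmult_le_reg_r with (t - tau); [lra|]; unfold Rdiv; rewrite Rmult_assoc, Rinv_l by lra; lra).
  assert (E : exp (u m * tau) * exp (- u m * t) = exp (- u m * (t - tau))) by (rewrite <- exp_plus; f_equal; ring).
  assert (H2 : (Q + rsum (S m) q) * exp (- u m * t) <= exp (u m * tau) * exp (- u m * t))
    by (apply Rmult_le_compat_r; [left; apply exp_pos| apply HP; lia]).
  assert (0 < exp (- u m * (t - tau))) by apply exp_pos.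
  nra.
Qed.

Lemma mul_succ_lt_1 S E c : 0 <= c -> c < S -> S * E <= c / (1 + c) -> E * (1 + S) < 1.
Proof.
  intros Hc HcS H.
  assert (H2 : c / (1 + c) < S / (1 + S)).
  { apply Rmult_lt_reg_r with ((1 + c) * (1 + S)). nra.
    replace (c / (1 + c) * ((1 + c) * (1 + S))) with (c * (1 + S)) by (field; lra).
    replace (S / (1 + S) * ((1 + c) * (1 + S))) with (S * (1 + c)) by (field; lra). nra. }
  assert (S * E * (1 + S) < S / (1 + S) * (1 + S)) by (apply Rmult_lt_compat_r; lra).
  replace (S / (1 + S) * (1 + S)) with S in H0 by (field; lra). nra.
Qed.

Lemma ln_ratio_le_of_exp_lt S l T : 0 < l -> 0 <= S ->
  exp (- (2 * l) * T) * (1 + S) < 1 -> ln (1 + S) / (2 * l) <= T.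
Proof.
  intros Hl HS H.
  assert (H4 : ln (exp (- (2 * l) * T) * (1 + S)) < 0)
    by (rewrite <- ln_1; apply ln_increasing; [assert (0 < exp (- (2 * l) * T)) by apply exp_pos; nra | lra]).
  rewrite ln_mult, ln_exp in H4 by (try apply exp_pos; lra).
  apply Rmult_le_reg_r with (2 * l). lra.
  unfold Rdiv. rewrite Rmult_assoc, Rinv_l by lra. nra.
Qed.

(** * Spectral decomposition *)

Section OrthonormalBasis.
Variables (n : nat) (pi : nat -> R) (phi : nat -> nat -> R).
Hypothesis pi_pos : forall x, (x < n)%nat -> 0 < pi x.
Hypothesis phi_orth : forall i k, (i < n)%nat -> (k < n)%nat ->
  rsum n (fun x => phi i x * phi k x * pi x) = if Nat.eqb i k then 1 else 0.

Let ker x y := rsum n (fun i => phi i x * phi i y).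

Lemma ker_sym x y : ker x y = ker y x.
Proof. unfold ker. apply rsum_ext; intros; lra. Qed.

Lemma ker_idem x z : rsum n (fun y => ker x y * ker y z * pi y) = ker x z.
Proof.
  transitivity (rsum n (fun y => rsum n (fun i => rsum n (fun k =>
     (phi i x * phi k z) * (phi i y * phi k y * pi y))))).
  { apply rsum_ext; intros y _. unfold ker. rewrite rsum_mult, <- rsum_scal_r.
    apply rsum_ext; intros i _. rewrite <- rsum_scal_r. apply rsum_ext; intros k _. lra. }
  rewrite rsum_comm.
  transitivity (rsum n (fun i => rsum n (fun k => (phi i x * phi k z) * (if Nat.eqb k i then 1 else 0)))).
  { apply rsum_ext; intros i Hi. rewrite rsum_comm. apply rsum_ext; intros k Hk.
    rewrite rsum_scal_l, phi_orth, Nat.eqb_sym; auto. }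
  unfold ker. apply rsum_ext; intros i Hi. rewrite rsum_kronecker; auto.
Qed.

(* [defect x] is the squared [L^2(1/pi)] distance from the indicator of [x] to its
   projection on the span of the [phi i]: it is nonnegative, and its [pi]-average
   vanishes because the [n] functions [phi i] are orthonormal. *)
Let defect x := rsum n (fun y => ((if Nat.eqb x y then 1 else 0) - ker x y * pi y) ^ 2 / pi y).

Lemma defect_eq x : (x < n)%nat -> defect x = / pi x - ker x x.
Proof.
  intros Hx. unfold defect.
  transitivity (rsum n (fun y => (/ pi y - 2 * ker x y) * (if Nat.eqb y x then 1 else 0)
                          + ker x y * ker y x * pi y)).
  { apply rsum_ext; intros y Hy. rewrite (ker_sym y x).
    specialize (pi_pos y Hy). rewrite Nat.eqb_sym. destruct (Nat.eqb y x); field; lra. }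
  rewrite rsum_plus, rsum_kronecker, ker_idem by auto. lra.
Qed.

Lemma defect_average : rsum n (fun x => pi x * defect x) = 0.
Proof.
  rewrite (rsum_ext _ _ (fun x => 1 - rsum n (fun i => phi i x * phi i x * pi x))).
  - rewrite rsum_minus, rsum_const, rsum_comm.
    rewrite (rsum_ext _ (fun i => rsum n (fun x => phi i x * phi i x * pi x)) (fun _ => 1)).
    + rewrite rsum_const; lra.
    + intros i Hi. rewrite phi_orth, Nat.eqb_refl; auto.
  - intros x Hx. rewrite defect_eq by auto. unfold ker.
    specialize (pi_pos x Hx). rewrite Rmult_minus_distr_l, Rinv_r by lra.
    f_equal. rewrite <- rsum_scal_l. apply rsum_ext; intros; lra.
Qed.

Lemma orthonormal_complete x y : (x < n)%nat -> (y < n)%nat ->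
  rsum n (fun i => phi i x * phi i y * pi y) = if Nat.eqb x y then 1 else 0.
Proof.
  intros Hx Hy.
  assert (Hterm : forall x y, (x < n)%nat -> (y < n)%nat ->
    0 <= ((if Nat.eqb x y then 1 else 0) - ker x y * pi y) ^ 2 / pi y).
  { intros x0 y0 _ Hy0. specialize (pi_pos y0 Hy0).
    apply Rmult_le_pos; [apply pow2_ge_0 | left; apply Rinv_0_lt_compat; lra]. }
  assert (Hdef : defect x = 0).
  { assert (H := rsum_nonneg_eq0 n (fun x => pi x * defect x)
      (fun x Hx => Rmult_le_pos _ _ (Rlt_le _ _ (pi_pos x Hx))
         (rsum_nonneg _ _ (fun y Hy => Hterm x y Hx Hy))) defect_average x Hx).
    specialize (pi_pos x Hx). simpl in H. destruct (Rmult_integral _ _ H); lra. }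
  assert (H := rsum_nonneg_eq0 n _ (fun y Hy => Hterm x y Hx Hy) Hdef y Hy). simpl in H.
  specialize (pi_pos y Hy).
  assert (((if Nat.eqb x y then 1 else 0) - ker x y * pi y) ^ 2 = 0).
  { destruct (Rmult_integral _ _ H) as [h|h]; auto.
    pose proof (Rinv_0_lt_compat _ pi_pos); lra. }
  assert ((if Nat.eqb x y then 1 else 0) - ker x y * pi y = 0) by nra.
  unfold ker in *. rewrite rsum_scal_r. lra.
Qed.

Lemma matpow_eigvec Q ev : (forall i x, (i < n)%nat -> (x < n)%nat ->
     rsum n (fun y => Q x y * phi i y) = ev i * phi i x) ->
  forall k i x, (i < n)%nat -> (x < n)%nat ->
  rsum n (fun y => matpow n Q k x y * phi i y) = ev i ^ k * phi i x.
Proof.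
  intros Hev k. induction k; intros i x Hi Hx; simpl.
  - rewrite (rsum_ext _ _ (fun y => phi i y * (if Nat.eqb y x then 1 else 0))).
    + rewrite rsum_kronecker by auto. lra.
    + intros y _. rewrite Nat.eqb_sym. lra.
  - unfold matmul.
    transitivity (rsum n (fun y => rsum n (fun z => matpow n Q k x z * (Q z y * phi i y)))).
    { apply rsum_ext; intros. rewrite <- rsum_scal_r. apply rsum_ext; intros; lra. }
    rewrite rsum_comm.
    transitivity (rsum n (fun z => matpow n Q k x z * phi i z * ev i)).
    { apply rsum_ext; intros z Hz. rewrite rsum_scal_l, Hev by auto. lra. }
    rewrite rsum_scal_r, IHk by auto. lra.
Qed.

Lemma matpow_spectral Q ev : (forall i x, (i < n)%nat -> (x < n)%nat ->
     rsum n (fun y => Q x y * phi i y) = ev i * phi i x) ->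
  forall k x y, (x < n)%nat -> (y < n)%nat ->
  matpow n Q k x y = rsum n (fun i => ev i ^ k * phi i x * phi i y * pi y).
Proof.
  intros Hev k x y Hx Hy.
  rewrite <- (rsum_kronecker n (fun z => matpow n Q k x z) y Hy).
  transitivity (rsum n (fun z => matpow n Q k x z * rsum n (fun i => phi i z * phi i y * pi y))).
  { apply rsum_ext; intros z Hz. rewrite orthonormal_complete; auto. }
  transitivity (rsum n (fun z => rsum n (fun i => (matpow n Q k x z * phi i z) * (phi i y * pi y)))).
  { apply rsum_ext; intros z Hz. rewrite <- rsum_scal_l. apply rsum_ext; intros; lra. }
  rewrite rsum_comm. apply rsum_ext; intros i Hi.
  rewrite rsum_scal_r, (matpow_eigvec Q ev Hev) by auto. lra.
Qed.

Lemma mexp_spectral L lam : (forall i x, (i < n)%nat -> (x < n)%nat ->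
     rsum n (fun y => L x y * phi i y) = - lam i * phi i x) ->
  forall t x y, (x < n)%nat -> (y < n)%nat ->
  mexp n L t x y = rsum n (fun i => exp (- lam i * t) * phi i x * phi i y * pi y).
Proof.
  intros Hev t x y Hx Hy.
  set (a i := phi i x * phi i y * pi y).
  replace (rsum n (fun i => exp (- lam i * t) * phi i x * phi i y * pi y))
    with (rsum n (fun i => a i * exp (- lam i * t))) by (apply rsum_ext; intros; unfold a; ring).
  set (l := rsum n (fun i => a i * exp (- lam i * t))).
  assert (Hcv : Un_cv (fun N => sum_f_R0 (fun k => t ^ k / INR (fact k) * matpow n L k x y) N) l).
  { eapply Un_cv_ext.
    2:{ apply (Un_cv_rsum n (fun i N => a i * sum_f_R0 (fun k => / INR (fact k) * (- lam i * t) ^ k) N)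
            (fun i => a i * exp (- lam i * t))).
        intros i Hi. apply CV_mult; [apply Un_cv_const | exact (proj2_sig (exist_exp (- lam i * t)))]. }
    intros N. simpl.
    rewrite (rsum_ext n _ (fun i => sum_f_R0 (fun k => a i * (/ INR (fact k) * (- lam i * t) ^ k)) N)).
    2:{ intros i _. rewrite scal_sum. apply sum_eq; intros; ring. }
    rewrite <- sum_f_R0_rsum. apply sum_eq. intros k _.
    rewrite (matpow_spectral L (fun i => - lam i) Hev k x y Hx Hy), <- rsum_scal_l.
    apply rsum_ext. intros i _. unfold a. rewrite Rpow_mult_distr. unfold Rdiv. ring. }
  unfold mexp. eapply UL_sequence; [apply (epsilon_spec (inhabits 0)); exists l |]; exact Hcv.
Qed.

Lemma parseval m B : (m < n)%nat ->
  rsum n (fun y => (rsum m (fun i => B i * phi (S i) y)) ^ 2 * pi y) = rsum m (fun i => B i ^ 2).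
Proof.
  intros Hm.
  transitivity (rsum n (fun y => rsum m (fun i => rsum m (fun k => (B i * B k) *
        (phi (S i) y * phi (S k) y * pi y))))).
  { apply rsum_ext; intros y _. rewrite <- Rsqr_pow2. unfold Rsqr. rewrite rsum_mult, <- rsum_scal_r.
    apply rsum_ext; intros i _. rewrite <- rsum_scal_r. apply rsum_ext; intros; ring. }
  rewrite rsum_comm. apply rsum_ext; intros i Hi. rewrite rsum_comm.
  rewrite (rsum_ext _ _ (fun k => (B k * B i) * (if Nat.eqb k i then 1 else 0))).
  - rewrite rsum_kronecker by auto. ring.
  - intros k Hk. rewrite rsum_scal_l, phi_orth by lia. simpl. rewrite (Nat.eqb_sym k i). ring.
Qed.

Variable mu : nat -> R.
Hypothesis mu_sum : rsum n mu = 1.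
Hypothesis phi0_one : forall x, (x < n)%nat -> phi 0%nat x = 1.
Hypothesis n_pos : (1 <= n)%nat.

Lemma muphi0 : muphi n mu phi 0 = 1.
Proof. unfold muphi. rewrite <- mu_sum. apply rsum_ext; intros. rewrite phi0_one; auto; ring. Qed.

Lemma chi2_spectral (g : nat -> R) (M : nat -> nat -> R) : g 0%nat = 1 ->
  (forall x y, (x < n)%nat -> (y < n)%nat -> M x y = rsum n (fun i => g i * phi i x * phi i y * pi y)) ->
  pisq n pi (fun y => rsum n (fun x => mu x * M x y) / pi y - 1)
   = rsum (n - 1) (fun i => (g (S i) * muphi n mu phi (S i)) ^ 2).
Proof.
  intros g0 HM. unfold pisq.
  rewrite <- (parseval (n - 1) (fun i => g (S i) * muphi n mu phi (S i))) by lia.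
  apply rsum_ext; intros y Hy. f_equal. f_equal.
  transitivity (rsum n (fun i => g i * muphi n mu phi i * phi i y) - 1).
  { f_equal. unfold muphi.
    transitivity (rsum n (fun x => rsum n (fun i => (g i * phi i y) * (mu x * phi i x)))).
    { unfold Rdiv. rewrite <- rsum_scal_r. apply rsum_ext; intros x Hx. rewrite HM by auto.
      rewrite <- rsum_scal_l, <- rsum_scal_r. apply rsum_ext; intros i _.
      specialize (pi_pos y Hy). field. lra. }
    rewrite rsum_comm. apply rsum_ext; intros i _. rewrite rsum_scal_l. ring. }
  replace n with (S (n - 1)) at 1 by lia.
  rewrite rsum_shift, g0, muphi0, phi0_one by auto. ring.
Qed.

Lemma chi2_eq_Ssum : pisq n pi (fun x => mu x / pi x - 1) = Ssum n mu phi (n - 1).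
Proof.
  unfold Ssum. transitivity (rsum (n - 1) (fun i => (1 * muphi n mu phi (S i)) ^ 2)).
  2:{ apply rsum_ext; intros; f_equal; ring. }
  rewrite <- (chi2_spectral (fun _ => 1) (fun x y => if Nat.eqb x y then 1 else 0)); auto.
  - unfold pisq. apply rsum_ext; intros y Hy. rewrite (rsum_kronecker n mu y Hy). reflexivity.
  - intros x y Hx Hy. rewrite <- (orthonormal_complete x y Hx Hy). apply rsum_ext; intros; ring.
Qed.
End OrthonormalBasis.

Lemma chi2_shift n pi mu : is_pos_prob n pi -> is_prob n mu ->
  pisq n pi (fun x => mu x / pi x) - 1 = pisq n pi (fun x => mu x / pi x - 1).
Proof.
  intros [pi_pos pi_sum] [_ mu_sum]. unfold pisq.
  rewrite (rsum_ext n (fun y => (mu y / pi y - 1) ^ 2 * pi y)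
     (fun y => (mu y / pi y) ^ 2 * pi y - 2 * mu y + pi y)).
  - rewrite rsum_plus, rsum_minus, rsum_scal_l, mu_sum, pi_sum. lra.
  - intros y Hy. specialize (pi_pos y Hy). field. lra.
Qed.

(** * The spectral profile *)

(* [d2^2] at time [t] when the squared coefficients are [w i = mu(phi_(i+1))^2] and the
   decay rates are [lam (S i)]. *)
Definition spec_profile (N : nat) (w lam : nat -> R) (t : R) : R :=
  rsum N (fun i => w i * exp (- (2 * lam (S i)) * t)).

Section Profile.
Variables (N : nat) (w lam : nat -> R).
Hypothesis w_nonneg : forall i, (i < N)%nat -> 0 <= w i.
Hypothesis lam_mono : forall j, (1 <= j)%nat -> (S j <= N)%nat -> lam j <= lam (S j).

Lemma time_ge_of_profile_le j c T : (1 <= j <= N)%nat -> 0 <= c -> c < rsum j w -> 0 < lam j ->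
  0 <= T -> spec_profile N w lam T <= c / (1 + c) -> ln (1 + rsum j w) / (2 * lam j) <= T.
Proof.
  intros Hj Hc HcS Hl HT HD. set (S_ := rsum j w) in *.
  assert (H1 : S_ * exp (- (2 * lam j) * T) <= spec_profile N w lam T).
  { apply Rle_trans with (rsum j (fun i => w i * exp (- (2 * lam (S i)) * T))).
    - unfold S_. rewrite <- rsum_scal_r. apply rsum_le. intros i Hi.
      apply Rmult_le_compat_l. apply w_nonneg; lia. apply exp_le.
      assert (lam (S i) <= lam j) by (apply (chain_le lam N lam_mono); lia). nra.
    - apply rsum_prefix_le. lia. intros i Hi. apply Rmult_le_pos; [apply w_nonneg; auto| left; apply exp_pos]. }
  apply ln_ratio_le_of_exp_lt; [lra | lra |]. apply (mul_succ_lt_1 S_ _ c); auto. lra.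
Qed.

(* Indices below [j0] contribute at most their total weight [<= c]; the rest is
   controlled by [exp_tail_sum_le], since [1 + rsum j w <= exp (2 lam j tau)] for [j >= j0]. *)
Lemma profile_le_split j0 c tau t :
  (forall j, (1 <= j <= N)%nat -> 0 <= lam j) ->
  (forall j, (j0 <= j <= N)%nat -> 0 < lam j) ->
  (1 <= j0 <= N)%nat -> rsum (j0 - 1) w <= c ->
  (forall j, (j0 <= j <= N)%nat -> ln (1 + rsum j w) / (2 * lam j) <= tau) ->
  0 <= tau -> tau < t ->
  spec_profile N w lam t <= c + t / (t - tau) * exp (- (2 * lam j0) * (t - tau)).
Proof.
  intros Hl0 Hlp Hj0 Hc Htau Htau0 Ht. unfold spec_profile.
  replace N with ((j0 - 1) + S (N - j0))%nat at 1 by lia. rewrite rsum_split.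
  apply Rplus_le_compat.
  - apply Rle_trans with (rsum (j0 - 1) w); auto. apply rsum_le. intros i Hi.
    assert (exp (- (2 * lam (S i)) * t) <= 1).
    { rewrite <- exp_0. apply exp_le. specialize (Hl0 (S i) ltac:(lia)). nra. }
    specialize (w_nonneg i ltac:(lia)). nra.
  - pose (u := fun k => 2 * lam (j0 + k)%nat).
    pose (q := fun k => w (j0 - 1 + k)%nat).
    rewrite (rsum_ext _ _ (fun k => q k * exp (- u k * t))).
    2:{ intros k Hk. unfold q, u. replace (S (j0 - 1 + k)) with (j0 + k)%nat by lia. reflexivity. }
    replace (- (2 * lam j0) * (t - tau)) with (- u 0%nat * (t - tau)) by (unfold u; rewrite Nat.add_0_r; ring).
    apply exp_tail_sum_le with (Q := rsum (j0 - 1) w); auto.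
    + apply rsum_nonneg; intros; apply w_nonneg; lia.
    + intros k Hk. unfold q. apply w_nonneg; lia.
    + intros k Hk. unfold u. replace (j0 + S k)%nat with (S (j0 + k)) by lia.
      specialize (lam_mono (j0 + k)%nat ltac:(lia) ltac:(lia)). lra.
    + intros k Hk. unfold q.
      replace (rsum (j0 - 1) w + rsum (S k) (fun k0 => w (j0 - 1 + k0)%nat)) with (rsum (j0 + k) w).
      2:{ replace (j0 + k)%nat with ((j0 - 1) + S k)%nat by lia. rewrite rsum_split. auto. }
      assert (HS : 0 <= rsum (j0 + k) w) by (apply rsum_nonneg; intros; apply w_nonneg; lia).
      enough (1 + rsum (j0 + k) w <= exp (u k * tau)) by lra.
      apply le_exp_of_ln_le; [lra|]. specialize (Htau (j0 + k)%nat ltac:(lia)).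
      specialize (Hlp (j0 + k)%nat ltac:(lia)). unfold u.
      apply Rmult_le_reg_r with (/ (2 * lam (j0 + k)%nat)).
      * apply Rinv_0_lt_compat; lra.
      * replace (2 * lam (j0 + k)%nat * tau * / (2 * lam (j0 + k)%nat)) with tau by (field; lra). exact Htau.
Qed.
End Profile.

Lemma min_pos_bound N (l : nat -> R) : (forall i, (i < N)%nat -> 0 < l i) ->
  exists m, 0 < m /\ forall i, (i < N)%nat -> m <= l i.
Proof.
  induction N; intros H.
  - exists 1; split; [lra| intros; lia].
  - destruct IHN as [m [Hm Hl]]; [intros; apply H; lia|].
    exists (Rmin m (l N)). split. { apply Rmin_pos; [auto| apply H; lia]. }
    intros i Hi. destruct (Nat.eq_dec i N). subst; apply Rmin_r.
    apply Rle_trans with m. apply Rmin_l. apply Hl; lia.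
Qed.

Lemma continuity_rsum N (f : nat -> R -> R) : (forall i, continuity (f i)) ->
  continuity (fun t => rsum N (fun i => f i t)).
Proof.
  intros H. induction N; simpl.
  - apply continuity_const. intros x y; auto.
  - apply (continuity_plus (fun t => rsum N (fun i => f i t)) (f N)); auto.
Qed.

Section ProfileDecay.
Variables (N : nat) (w lam : nat -> R).
Hypothesis w_nonneg : forall i, (i < N)%nat -> 0 <= w i.
Hypothesis lam_pos : forall i, (i < N)%nat -> 0 < lam (S i).
Let D := spec_profile N w lam.

Lemma profile_nonneg t : 0 <= D t.
Proof. apply rsum_nonneg; intros i Hi. apply Rmult_le_pos; [auto| left; apply exp_pos]. Qed.

Lemma profile_continuous : continuity D.
Proof.
  apply continuity_rsum. intros i. apply derivable_continuous. reg.
Qed.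

Lemma profile_strict_decr t t' : (exists i, (i < N)%nat /\ 0 < w i) -> t < t' -> D t' < D t.
Proof.
  intros [i [Hi Hw]] Htt. apply rsum_lt.
  - intros k Hk. apply Rmult_le_compat_l. auto. apply exp_le. specialize (lam_pos k Hk). nra.
  - exists i. split; auto. apply Rmult_lt_compat_l; auto. apply exp_increasing. specialize (lam_pos i Hi). nra.
Qed.

Lemma profile_eventually_lt e : 0 < e -> exists T1, 0 <= T1 /\ D T1 < e.
Proof.
  intros He. destruct (min_pos_bound N (fun i => 2 * lam (S i))) as [m [Hm Hml]].
  { intros i Hi. specialize (lam_pos i Hi). lra. }
  set (W := rsum N w).
  assert (HW : 0 <= W) by (apply rsum_nonneg; auto).
  set (z := W / e + 1).
  assert (Hz : 1 <= z) by (unfold z; assert (0 <= W / e) by (apply Rdiv_nonneg; lra); lra).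
  assert (Hlnz : 0 <= ln z / m).
  { apply Rdiv_nonneg; auto. rewrite <- ln_1. apply ln_le; lra. }
  exists (ln z / m). split; auto.
  apply Rle_lt_trans with (W * exp (- m * (ln z / m))).
  - unfold D, spec_profile, W. rewrite <- rsum_scal_r. apply rsum_le. intros i Hi.
    apply Rmult_le_compat_l; auto. apply exp_le. specialize (Hml i Hi). simpl in Hml. nra.
  - replace (- m * (ln z / m)) with (- ln z) by (field; lra). rewrite exp_Ropp, exp_ln by lra.
    apply Rmult_lt_reg_r with z. lra.
    rewrite Rmult_assoc, Rinv_l by lra. unfold z, Rdiv.
    replace (e * (W * / e + 1)) with (W + e) by (field; lra). lra.
Qed.

(* The profile is continuous and, unless identically zero, strictly decreasing to [0]:
   the intermediate value theorem gives the first time it reaches [e ^ 2]. *)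
Lemma mixing_time_exists e : 0 < e -> exists T, 0 <= T /\ sqrt (D T) <= e /\
   forall t, 0 <= t -> sqrt (D t) <= e -> T <= t.
Proof.
  intros He.
  destruct (Rle_dec (D 0) (e ^ 2)) as [H0|H0].
  - exists 0. split; [lra|]. split; [apply sqrt_le_iff; auto; apply profile_nonneg|]. intros; auto.
  - assert (Hex : exists i, (i < N)%nat /\ 0 < w i).
    { apply NNPP. intros Hn. apply H0.
      replace (D 0) with 0; [apply pow2_ge_0|].
      unfold D, spec_profile. rewrite <- (Rmult_0_r (INR N)), <- rsum_const.
      apply rsum_ext. intros i Hi. destruct (w_nonneg i Hi) as [Hw|Hw].
      - exfalso; apply Hn; exists i; auto.
      - rewrite <- Hw; ring. }
    destruct (profile_eventually_lt (e ^ 2) ltac:(nra)) as [T1 [HT1 HDT1]].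
    assert (HT1p : 0 < T1) by (destruct HT1 as [|HT1]; auto; subst; lra).
    destruct (IVT (fun t => e ^ 2 - D t) 0 T1) as [z [Hz Hfz]]; auto; try lra.
    + apply continuity_minus; [apply continuity_const; intros ? ?; auto | apply profile_continuous].
    + exists z. split; [lra|]. split.
      * apply sqrt_le_iff; auto. apply profile_nonneg. lra.
      * intros t Ht Hdt. apply sqrt_le_iff in Hdt; auto; [|apply profile_nonneg].
        destruct (Rle_dec z t) as [|Hzt]; auto. exfalso.
        assert (D z < D t) by (apply profile_strict_decr; auto; lra). lra.
Qed.
End ProfileDecay.

Lemma T2c_spec d e : (exists T, 0 <= T /\ d T <= e /\ forall t, 0 <= t -> d t <= e -> T <= t) ->
  0 <= T2c d e /\ d (T2c d e) <= e /\ forall t, 0 <= t -> d t <= e -> T2c d e <= t.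
Proof. intros H. unfold T2c. apply epsilon_spec. exact H. Qed.

Lemma nat_least (P : nat -> Prop) k : P k -> exists m, P m /\ forall j, P j -> (m <= j)%nat.
Proof.
  revert P. induction k as [k IH] using (well_founded_induction Nat.lt_wf_0). intros P Hk.
  destruct (classic (exists j, (j < k)%nat /\ P j)) as [[j [Hj HPj]]|Hn].
  - apply (IH j Hj P HPj).
  - exists k. split; auto. intros j HPj. destruct (Nat.lt_ge_cases j k); auto. exfalso; apply Hn; eauto.
Qed.

Lemma T2d_spec (d : nat -> R) e :
  (exists m, T2d d e = Fin (INR m) /\ d m <= e /\ forall k, d k <= e -> (m <= k)%nat) \/
  (T2d d e = PInf /\ forall k, e < d k).
Proof.
  assert (Hex : exists T : ER, match T with
    | Fin t => exists m : nat, t = INR m /\ d m <= e /\ forall k : nat, d k <= e -> (m <= k)%nat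
    | PInf => forall k : nat, e < d k end).
  { destruct (classic (exists k, d k <= e)) as [[k Hk]|Hn].
    - destruct (nat_least (fun k => d k <= e) k Hk) as [m [Hm Hmin]].
      exists (Fin (INR m)). exists m. auto.
    - exists PInf. intros k. apply Rnot_le_lt. intros H. apply Hn. eauto. }
  assert (HS := epsilon_spec (inhabits PInf) _ Hex). fold (T2d d e) in HS.
  destruct (T2d d e) as [t|].
  - left. destruct HS as [m [Ht [Hm Hmin]]]. subst. exists m. auto.
  - right. auto.
Qed.

Lemma T2d_le d e m : d m <= e -> exists k, T2d d e = Fin (INR k) /\ (k <= m)%nat.
Proof.
  intros H. destruct (T2d_spec d e) as [[k [E [Hk Hmin]]]|[E Hall]].
  - exists k. split; auto.
  - specialize (Hall m). lra.
Qed.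

Lemma lfind_none P m : lfind P m = None -> forall k, (1 <= k <= m)%nat -> P k = false.
Proof.
  induction m; intros H k Hk; [lia|]. simpl in H.
  destruct (lfind P m) eqn:E; [discriminate|].
  destruct (P (S m)) eqn:EP; [discriminate|].
  destruct (Nat.eq_dec k (S m)). subst; auto. apply IHm; auto; lia.
Qed.

Lemma lfind_some P m j : lfind P m = Some j ->
  (1 <= j <= m)%nat /\ P j = true /\ forall k, (1 <= k < j)%nat -> P k = false.
Proof.
  revert j. induction m; intros j H; simpl in H; [discriminate|].
  destruct (lfind P m) as [j'|] eqn:E.
  - inversion H; subst. destruct (IHm j eq_refl) as [A [B C]]. split; [lia|auto].
  - destruct (P (S m)) eqn:EP; [|discriminate]. inversion H; subst.
    split; [lia|]. split; auto. intros k Hk. apply (lfind_none P m E). lia.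
Qed.

Lemma Ssum_mono n mu phi j k : (j <= k)%nat -> Ssum n mu phi j <= Ssum n mu phi k.
Proof.
  intros H. unfold Ssum. replace k with (j + (k - j))%nat by lia. rewrite rsum_split.
  assert (0 <= rsum (k - j) (fun i => muphi n mu phi (S (j + i)) ^ 2)) by (apply rsum_nonneg; intros; apply pow2_ge_0).
  lra.
Qed.

Lemma jidx_spec n mu phi c : 0 < c -> c < Ssum n mu phi (n - 1) ->
  (1 <= jidx n mu phi c <= n - 1)%nat /\ c < Ssum n mu phi (jidx n mu phi c) /\
  Ssum n mu phi (jidx n mu phi c - 1) <= c.
Proof.
  intros Hc HcS. unfold jidx.
  set (P := fun j => if Rlt_dec c (Ssum n mu phi j) then true else false).
  assert (Hn : (1 <= n - 1)%nat).
  { destruct (n - 1)%nat eqn:E; [|lia]. unfold Ssum in HcS. simpl in HcS. lra. }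
  destruct (lfind P (n - 1)) as [j|] eqn:E.
  - destruct (lfind_some P _ _ E) as [Hj [HP Hk]]. unfold P in HP.
    destruct (Rlt_dec c (Ssum n mu phi j)) as [Hlt|]; [|discriminate].
    split; auto. split; auto.
    destruct (Nat.eq_dec j 1) as [->|Hj1].
    + unfold Ssum; simpl. lra.
    + specialize (Hk (j - 1)%nat ltac:(lia)). unfold P in Hk.
      destruct (Rlt_dec c (Ssum n mu phi (j - 1))); [discriminate|]. lra.
  - exfalso. assert (H := lfind_none P _ E (n - 1)%nat ltac:(lia)). unfold P in H.
    destruct (Rlt_dec c (Ssum n mu phi (n - 1))); [discriminate| lra].
Qed.

Lemma rmaxr_ge f a k : forall j, (a <= j <= a + k)%nat -> f j <= rmaxr f a k.
Proof.
  induction k; intros j Hj; simpl.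
  - replace j with a by lia. lra.
  - destruct (Nat.eq_dec j (a + S k)) as [->|Hne].
    + apply Rmax_r.
    + apply Rle_trans with (rmaxr f a k). apply IHk; lia. apply Rmax_l.
Qed.

Lemma rmaxr_attained f a k : exists j, (a <= j <= a + k)%nat /\ rmaxr f a k = f j.
Proof.
  induction k; simpl.
  - exists a. split; [lia|auto].
  - destruct IHk as [j [Hj E]]. unfold Rmax.
    destruct (Rle_dec (rmaxr f a k) (f (a + S k)%nat)).
    + exists (a + S k)%nat. split; [lia|auto].
    + exists j. split; [lia|auto].
Qed.

Lemma ERle_trans x y z : ERle x y -> ERle y z -> ERle x z.
Proof. destruct x, y, z; simpl; intros; auto; try lra; contradiction. Qed.

Lemma ERle_PInf x : ERle x PInf.
Proof. destruct x; simpl; auto. Qed.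

Lemma ermax_l x y : ERle x (ermax x y).
Proof. destruct x, y; simpl; auto. apply Rmax_l. Qed.

Lemma ermax_r x y : ERle y (ermax x y).
Proof. destruct x, y; simpl; auto. apply Rmax_r. Qed.

Lemma ermax_lub x y z : ERle x z -> ERle y z -> ERle (ermax x y) z.
Proof. destruct x, y, z; simpl; auto. intros. apply Rmax_lub; auto. Qed.

Lemma ermaxr_ge f a k : forall j, (a <= j <= a + k)%nat -> ERle (f j) (ermaxr f a k).
Proof.
  induction k; intros j Hj; simpl.
  - replace j with a by lia. destruct (f a); simpl; auto; lra.
  - destruct (Nat.eq_dec j (a + S k)) as [->|Hne].
    + apply ermax_r.
    + eapply ERle_trans. apply IHk; lia. apply ermax_l.
Qed.

Lemma ermaxr_lub f a k X : (forall j, (a <= j <= a + k)%nat -> ERle (f j) X) -> ERle (ermaxr f a k) X.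
Proof.
  induction k; intros H; simpl.
  - apply H; lia.
  - apply ermax_lub. apply IHk; intros; apply H; lia. apply H; lia.
Qed.

Lemma alpha_time_bound tau l A : 0 < tau -> 0 < l -> 0 < A ->
  let al := sqrt (tau * l) in let ts := tau * (al + A) / al in
  0 < al /\ tau < ts /\ ts / (ts - tau) * exp (- (2 * l) * (ts - tau)) <= (A + al) / (A * exp (al * A)).
Proof.
  intros Ht Hl HA al ts.
  assert (Halp : 0 < al) by (apply sqrt_lt_R0; nra).
  assert (Hal2 : al * al = tau * l) by (apply sqrt_sqrt; nra).
  assert (Hts : tau < ts).
  { unfold ts. apply Rmult_lt_reg_r with al; auto. unfold Rdiv. rewrite Rmult_assoc, Rinv_l by lra. nra. }
  split; auto. split; auto.
  assert (E1 : ts - tau = tau * A / al) by (unfold ts; field; lra).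
  assert (E2 : ts / (ts - tau) = (al + A) / A) by (rewrite E1; unfold ts; field; repeat split; lra).
  assert (E3 : - (2 * l) * (ts - tau) = - (2 * (al * A))).
  { rewrite E1. apply Rmult_eq_reg_r with al; [|lra]. unfold Rdiv.
    replace (- (2 * l) * (tau * A * / al) * al) with (- (2 * (tau * l * A))) by (field; lra).
    rewrite <- Hal2. ring. }
  rewrite E2, E3.
  assert (Hexp : exp (- (2 * (al * A))) <= / exp (al * A)).
  { rewrite <- exp_Ropp. apply exp_le. assert (0 < al * A) by nra. lra. }
  replace ((A + al) / (A * exp (al * A))) with ((al + A) / A * / exp (al * A))
    by (field; split; [apply exp_neq_0 | lra]).
  apply Rmult_le_compat_l; auto. apply Rdiv_nonneg; lra.
Qed.

Lemma ln_gap_ge eps : 0 < eps -> 2 * eps ^ 2 < 1 ->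
  23 / 10 / eps ^ 2 <= ln (1 + eps ^ 2 / 2) * (6 / eps ^ 4 - 1).
Proof.
  intros He H2. set (x := / eps ^ 2).
  assert (Hep : 0 < eps ^ 2) by nra.
  assert (Hx : x * eps ^ 2 = 1) by (unfold x; field; lra).
  assert (Hx2 : 2 <= x) by (apply Rmult_le_reg_r with (eps ^ 2); auto; rewrite Hx; lra).
  assert (Hk : 6 / eps ^ 4 - 1 = 6 * x * x - 1) by (unfold x; field; lra).
  assert (Hln : 2 / 5 * eps ^ 2 <= ln (1 + eps ^ 2 / 2)).
  { apply Rle_trans with (2 := ln_1p_ge (eps ^ 2 / 2) ltac:(lra)).
    apply Rmult_le_reg_r with (1 + eps ^ 2 / 2); [lra|].
    replace (eps ^ 2 / 2 / (1 + eps ^ 2 / 2) * (1 + eps ^ 2 / 2)) with (eps ^ 2 / 2) by (field; lra). nra. }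
  rewrite Hk. unfold Rdiv. fold x.
  apply Rle_trans with (2 / 5 * eps ^ 2 * (6 * x * x - 1)); [|apply Rmult_le_compat_r; nra].
  replace (2 / 5 * eps ^ 2 * (6 * x * x - 1)) with (2 / 5 * (x * eps ^ 2) * (6 * x) - 2 / 5 * eps ^ 2) by ring.
  rewrite Hx. lra.
Qed.

Lemma four_le_exp x y : 2 <= x -> 23 / 10 * x <= y -> 4 * x <= exp y.
Proof.
  intros Hx Hy.
  assert (E : exp y = exp (y / 2) * exp (y / 2)) by (rewrite <- exp_plus; f_equal; field).
  assert (H3 := exp_ineq1_le (y / 2)).
  assert ((1 + y / 2) * (1 + y / 2) <= exp (y / 2) * exp (y / 2)) by (apply Rmult_le_compat; lra).
  nra.
Qed.

(* [k / (k - 1) <= 2], and by [ln_gap_ge] the exponent is at least [2.3 / eps ^ 2], so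
   the exponential is below [eps ^ 2 / 4]. *)
Lemma eps_time_bound eps tau l S0 : 0 < eps -> 2 * eps ^ 2 < 1 -> eps ^ 2 / 2 < S0 ->
  ln (1 + S0) / (2 * l) <= tau -> 0 < l ->
  let k := 6 / eps ^ 4 in
  tau < k * tau /\ eps ^ 2 / 2 + k * tau / (k * tau - tau) * exp (- (2 * l) * (k * tau - tau)) <= eps ^ 2.
Proof.
  intros He H2 HS Ht0 Hl k.
  assert (Hep : 0 < eps ^ 2) by nra.
  assert (He4 : eps ^ 4 = eps ^ 2 * eps ^ 2) by ring.
  assert (Hln0 : 0 < ln (1 + S0)) by (rewrite <- ln_1; apply ln_increasing; lra).
  assert (Htp : 0 < tau).
  { apply Rlt_le_trans with (2 := Ht0). apply Rdiv_lt_0_compat; lra. }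
  assert (Hk2 : 2 <= k).
  { unfold k. apply Rmult_le_reg_r with (eps ^ 4); [nra|].
    unfold Rdiv. rewrite Rmult_assoc, Rinv_l by nra. nra. }
  split; [nra|].
  replace (k * tau / (k * tau - tau)) with (k / (k - 1)) by (field; repeat split; nra).
  assert (Hkk : k / (k - 1) <= 2).
  { apply Rmult_le_reg_r with (k - 1); [lra|]. unfold Rdiv. rewrite Rmult_assoc, Rinv_l by lra. lra. }
  set (y := 2 * l * tau * (k - 1)).
  assert (Hy : 23 / 10 / eps ^ 2 <= y).
  { apply Rle_trans with (1 := ln_gap_ge eps He H2). unfold y. apply Rmult_le_compat_r; [change (0 <= k - 1); lra|].
    apply Rle_trans with (ln (1 + S0)); [apply ln_le; lra|].
    apply Rmult_le_reg_r with (/ (2 * l)); [apply Rinv_0_lt_compat; lra|].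
    replace (2 * l * tau * / (2 * l)) with tau by (field; lra). exact Ht0. }
  assert (Hexpy : 4 * / eps ^ 2 <= exp y).
  { apply four_le_exp; [|unfold Rdiv in Hy; lra].
    apply Rmult_le_reg_r with (eps ^ 2); auto. rewrite Rinv_l by lra. lra. }
  replace (- (2 * l) * (k * tau - tau)) with (- y) by (unfold y; ring).
  rewrite exp_Ropp.
  assert (0 < exp y) by apply exp_pos.
  assert (/ exp y <= eps ^ 2 / 4).
  { apply Rmult_le_reg_r with (exp y); auto. rewrite Rinv_l by lra.
    apply Rle_trans with (eps ^ 2 / 4 * (4 * / eps ^ 2)); [right; field; lra|].
    apply Rmult_le_compat_l; lra. }
  assert (k / (k - 1) * / exp y <= 2 * (eps ^ 2 / 4)).
  { apply Rmult_le_compat; auto. apply Rdiv_nonneg; lra. left; apply Rinv_0_lt_compat; auto. }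
  lra.
Qed.

Lemma tail_bound_antitone tau u t1 t2 : 0 <= u -> tau < t1 -> t1 <= t2 -> 0 <= tau ->
  t2 / (t2 - tau) * exp (- u * (t2 - tau)) <= t1 / (t1 - tau) * exp (- u * (t1 - tau)).
Proof.
  intros Hu H1 H2 Ht.
  apply Rmult_le_compat.
  - apply Rdiv_nonneg; lra.
  - left; apply exp_pos.
  - apply Rmult_le_reg_r with ((t2 - tau) * (t1 - tau)). nra.
    replace (t2 / (t2 - tau) * ((t2 - tau) * (t1 - tau))) with (t2 * (t1 - tau)) by (field; lra).
    replace (t1 / (t1 - tau) * ((t2 - tau) * (t1 - tau))) with (t1 * (t2 - tau)) by (field; lra). nra.
  - apply exp_le. nra.
Qed.

Lemma nat_ceil t : 0 <= t -> exists m : nat, t <= INR m /\ INR m <= t + 1.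
Proof.
  intros Ht. destruct (archimed t) as [H1 H2].
  assert (Hz : (0 <= up t)%Z) by (apply le_IZR; simpl; lra).
  exists (Z.to_nat (up t)). rewrite INR_IZR_INZ, Z2Nat.id by auto. split; lra.
Qed.

(** * Continuous time *)

Section ContinuousTime.
Variables (n : nat) (L : nat -> nat -> R) (pi mu lam : nat -> R) (phi : nat -> nat -> R).
Hypothesis Hpi : is_pos_prob n pi.
Hypothesis Hmu : is_prob n mu.
Hypothesis Heig : eigen_c n L pi lam phi.
Hypothesis two_le_n : (2 <= n)%nat.

Let w i := muphi n mu phi (S i) ^ 2.
Let N := (n - 1)%nat.

Lemma cont_w_nonneg i : (i < N)%nat -> 0 <= w i.
Proof. intros; apply pow2_ge_0. Qed.

Lemma cont_chi2 : pisq n pi (fun x => mu x / pi x) - 1 = Ssum n mu phi N /\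
                  pisq n pi (fun x => mu x / pi x - 1) = Ssum n mu phi N.
Proof.
  rewrite chi2_shift by auto.
  destruct Hpi as [pi_pos _], Hmu as [_ mu_sum], Heig as [_ [orth [_ [phi0 _]]]].
  rewrite (chi2_eq_Ssum n pi phi pi_pos orth mu mu_sum phi0) by lia. auto.
Qed.

Lemma cont_lam_mono j : (1 <= j)%nat -> (S j <= N)%nat -> lam j <= lam (S j).
Proof. intros. destruct Heig as [_ [_ [_ [_ [_ Hmono]]]]]. apply Hmono; unfold N in *; lia. Qed.

Lemma cont_lam_pos j : (1 <= j <= N)%nat -> 0 < lam j.
Proof.
  intros Hj. destruct Heig as [_ [_ [_ [_ [H1 _]]]]].
  assert (0 < lam 1%nat) by (apply H1; lia).
  assert (lam 1%nat <= lam j) by (apply (chain_le lam N cont_lam_mono); lia). lra.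
Qed.

Lemma d2_cont_eq : d2_cont n L pi mu = fun t => sqrt (spec_profile N w lam t).
Proof.
  apply functional_extensionality. intros t.
  destruct Hpi as [pi_pos _], Hmu as [_ mu_sum], Heig as [Hev [orth [Hl0 [phi0 _]]]].
  unfold d2_cont, l2norm. f_equal.
  change (rsum n (fun y => (rsum n (fun x => mu x * mexp n L t x y) / pi y - 1) ^ 2 * pi y))
    with (pisq n pi (fun y => rsum n (fun x => mu x * mexp n L t x y) / pi y - 1)).
  rewrite (chi2_spectral n pi phi pi_pos orth mu mu_sum phi0 ltac:(lia) (fun i => exp (- lam i * t))).
  - apply rsum_ext. intros i Hi. unfold w.
    replace (exp (- (2 * lam (S i)) * t)) with (exp (- lam (S i) * t) ^ 2); [ring|].
    simpl. rewrite Rmult_1_r, <- exp_plus. f_equal. ring.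
  - rewrite Hl0. replace (- 0 * t) with 0 by ring. apply exp_0.
  - intros x y Hx Hy. apply (mexp_spectral n pi phi pi_pos orth); auto.
Qed.

Lemma cont_T2_spec e : 0 < e ->
  let T := T2c (d2_cont n L pi mu) e in
  0 <= T /\ spec_profile N w lam T <= e ^ 2 /\
  forall t, 0 <= t -> spec_profile N w lam t <= e ^ 2 -> T <= t.
Proof.
  intros He T. unfold T. rewrite d2_cont_eq.
  assert (Hex := mixing_time_exists N w lam cont_w_nonneg
                 (fun i Hi => cont_lam_pos (S i) ltac:(unfold N in *; lia)) e He).
  destruct (T2c_spec _ e Hex) as [A [B C]].
  assert (Dnn := profile_nonneg N w lam cont_w_nonneg).
  split; auto. split; [apply sqrt_le_iff; auto|].
  intros t Ht HD. apply C; auto. apply sqrt_le_iff; auto.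
Qed.

Lemma cont_tau_facts c : 0 < c -> c < Ssum n mu phi N ->
  let j0 := jidx n mu phi c in let tau := tau_c n mu phi lam c in
  (1 <= j0 <= N)%nat /\ rsum (j0 - 1) w <= c /\ c < rsum j0 w /\
  ln (1 + rsum j0 w) / (2 * lam j0) <= tau /\ 0 < tau /\
  (forall j, (j0 <= j <= N)%nat -> ln (1 + rsum j w) / (2 * lam j) <= tau).
Proof.
  intros Hc HcV j0 tau.
  destruct (jidx_spec n mu phi c Hc HcV) as [Hj0 [Hj0c Hj0p]]. fold j0 in Hj0, Hj0c, Hj0p.
  change (c < rsum j0 w) in Hj0c. change (rsum (j0 - 1) w <= c) in Hj0p.
  assert (Hall : forall j, (j0 <= j <= N)%nat -> ln (1 + rsum j w) / (2 * lam j) <= tau).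
  { intros j Hj. unfold tau, tau_c. fold j0.
    apply (rmaxr_ge (fun j => ln (1 + Ssum n mu phi j) / (2 * lam j)) j0 (n - 1 - j0)). unfold N in *; lia. }
  assert (Hl : 0 < lam j0) by (apply cont_lam_pos; auto).
  assert (Hpos : 0 < ln (1 + rsum j0 w) / (2 * lam j0)).
  { apply Rdiv_lt_0_compat; [|lra]. rewrite <- ln_1. apply ln_increasing; lra. }
  assert (H0 := Hall j0 ltac:(lia)).
  split; [exact Hj0|]. split; [exact Hj0p|]. split; [exact Hj0c|].
  split; [exact H0|]. split; [lra | exact Hall].
Qed.

Lemma tau_c_le_time c T : 0 < c -> c < Ssum n mu phi N -> 0 <= T ->
  spec_profile N w lam T <= c / (1 + c) -> tau_c n mu phi lam c <= T.
Proof.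
  intros Hc HcV HT HD.
  destruct (jidx_spec n mu phi c Hc HcV) as [Hj0 [Hj0c _]].
  unfold tau_c. set (j0 := jidx n mu phi c) in *.
  destruct (rmaxr_attained (fun j => ln (1 + Ssum n mu phi j) / (2 * lam j)) j0 (n - 1 - j0)) as [j [Hj ->]].
  apply (time_ge_of_profile_le N w lam cont_w_nonneg cont_lam_mono j c T); auto.
  - unfold N; lia.
  - lra.
  - apply Rlt_le_trans with (Ssum n mu phi j0); auto. apply Ssum_mono. lia.
  - apply cont_lam_pos. unfold N; lia.
Qed.

Lemma cont_profile_le c t : 0 < c -> c < Ssum n mu phi N -> tau_c n mu phi lam c < t ->
  spec_profile N w lam t <= c + t / (t - tau_c n mu phi lam c) *
     exp (- (2 * lam (jidx n mu phi c)) * (t - tau_c n mu phi lam c)).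
Proof.
  intros Hc HcV Ht.
  destruct (cont_tau_facts c Hc HcV) as [Hj0 [Hp [_ [_ [Htp Hall]]]]].
  apply (profile_le_split N w lam cont_w_nonneg cont_lam_mono); auto; try lra.
  - intros; left; apply cont_lam_pos; auto.
  - intros; apply cont_lam_pos; lia.
Qed.

Lemma cont_bounds_c c A : 0 < c -> c < pisq n pi (fun x => mu x / pi x) - 1 -> 0 < A ->
  let al := alpha_c n mu phi lam c in
  al / (al + A) * T2c (d2_cont n L pi mu) (sqrt (c + (A + al) / (A * exp (al * A))))
    <= tau_c n mu phi lam c
  /\ tau_c n mu phi lam c <= T2c (d2_cont n L pi mu) (sqrt (c / (1 + c))).
Proof.
  intros Hc HcV HA al. rewrite (proj1 cont_chi2) in HcV.
  destruct (cont_tau_facts c Hc HcV) as [Hj0 [_ [_ [_ [Htp _]]]]].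
  set (tau := tau_c n mu phi lam c) in *. set (j0 := jidx n mu phi c) in *.
  assert (Hl : 0 < lam j0) by (apply cont_lam_pos; auto).
  split.
  - destruct (alpha_time_bound tau (lam j0) A Htp Hl HA) as [Halp [Hts Hcalc]].
    assert (Hal : sqrt (tau * lam j0) = al) by reflexivity.
    rewrite Hal in Halp, Hts, Hcalc. set (ts := tau * (al + A) / al) in *.
    assert (Hq : 0 < (A + al) / (A * exp (al * A))).
    { apply Rdiv_lt_0_compat; [lra|]. apply Rmult_lt_0_compat; auto; apply exp_pos. }
    set (e := sqrt (c + (A + al) / (A * exp (al * A)))).
    assert (He : 0 < e) by (apply sqrt_lt_R0; lra).
    assert (He2 : e ^ 2 = c + (A + al) / (A * exp (al * A)))
      by (unfold e; rewrite <- Rsqr_pow2; apply Rsqr_sqrt; lra).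
    destruct (cont_T2_spec e He) as [_ [_ HT2]].
    assert (HT : T2c (d2_cont n L pi mu) e <= ts).
    { apply HT2; [lra|]. rewrite He2. pose proof (cont_profile_le c ts Hc HcV Hts) as HD. fold tau j0 in HD. lra. }
    apply Rle_trans with (al / (al + A) * ts).
    + apply Rmult_le_compat_l; auto. apply Rdiv_nonneg; lra.
    + unfold ts. right. field. lra.
  - assert (Hcc : 0 < c / (1 + c)) by (apply Rdiv_lt_0_compat; lra).
    destruct (cont_T2_spec _ (sqrt_lt_R0 _ Hcc)) as [HT0 [HT1 _]].
    apply tau_c_le_time; auto. rewrite <- Rsqr_pow2, Rsqr_sqrt in HT1; lra.
Qed.

Lemma cont_bounds_eps eps : 0 < eps ->
  eps < sqrt (Rmin (pisq n pi (fun x => mu x / pi x - 1)) 1 / 2) ->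
  tau_c n mu phi lam (2 * eps ^ 2) <= T2c (d2_cont n L pi mu) eps
  /\ T2c (d2_cont n L pi mu) eps <= 6 / eps ^ 4 * tau_c n mu phi lam (eps ^ 2 / 2).
Proof.
  intros He Hlt. rewrite (proj2 cont_chi2) in Hlt. apply pow2_lt_of_lt_sqrt in Hlt; auto.
  assert (H1 : 2 * eps ^ 2 < Ssum n mu phi N) by (pose proof (Rmin_l (Ssum n mu phi N) 1); lra).
  assert (H2 : 2 * eps ^ 2 < 1) by (pose proof (Rmin_r (Ssum n mu phi N) 1); lra).
  assert (Hep : 0 < eps ^ 2) by nra.
  destruct (cont_T2_spec eps He) as [HT0 [HT1 HT2]].
  split.
  - apply tau_c_le_time; auto; [lra|].
    apply Rle_trans with (1 := HT1). apply Rmult_le_reg_r with (1 + 2 * eps ^ 2); [lra|].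
    unfold Rdiv. rewrite Rmult_assoc, Rinv_l by lra. nra.
  - set (c := eps ^ 2 / 2).
    assert (Hc : 0 < c) by (unfold c; lra). assert (HcV : c < Ssum n mu phi N) by (unfold c; lra).
    destruct (cont_tau_facts c Hc HcV) as [Hj0 [_ [Hj0c [Ht0 [Htp _]]]]].
    destruct (eps_time_bound eps _ _ _ He H2 Hj0c Ht0 (cont_lam_pos _ Hj0)) as [Hts Hcalc].
    apply HT2; [lra|].
    pose proof (cont_profile_le c _ Hc HcV Hts). unfold c in *. lra.
Qed.
End ContinuousTime.

(** * Discrete time *)

Lemma pow2_pow_abs b m : (b ^ m) ^ 2 = (Rabs b ^ m) ^ 2.
Proof. rewrite RPow_abs, <- !Rsqr_pow2, Rsqr_abs. auto. Qed.

Lemma pow2_pow_exp b m : b <> 0 -> (b ^ m) ^ 2 = exp (- (2 * - ln (Rabs b)) * INR m).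
Proof.
  intros Hb. rewrite pow2_pow_abs. assert (Ha : 0 < Rabs b) by (apply Rabs_pos_lt; auto).
  rewrite <- pow_mult, <- (exp_ln (Rabs b ^ (m * 2))) by (apply pow_lt; auto).
  rewrite ln_pow by auto. f_equal. rewrite mult_INR. simpl. ring.
Qed.

Lemma pow2_pow_le a b m : Rabs a <= Rabs b -> (a ^ m) ^ 2 <= (b ^ m) ^ 2.
Proof.
  intros H. rewrite (pow2_pow_abs a), (pow2_pow_abs b).
  assert (0 <= Rabs a ^ m) by (apply pow_le; apply Rabs_pos).
  assert (Rabs a ^ m <= Rabs b ^ m) by (apply pow_incr; split; auto; apply Rabs_pos).
  nra.
Qed.

Lemma pow2_pow_le1 b m : Rabs b <= 1 -> (b ^ m) ^ 2 <= 1.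
Proof.
  intros H. apply Rle_trans with ((1 ^ m) ^ 2); [apply pow2_pow_le; rewrite Rabs_R1; auto |].
  rewrite pow1; lra.
Qed.

Lemma argmax_abs n (f : nat -> R) : (1 <= n)%nat ->
  exists x0, (x0 < n)%nat /\ forall x, (x < n)%nat -> Rabs (f x) <= Rabs (f x0).
Proof.
  induction n; intros Hn; [lia|].
  destruct (Nat.eq_dec n 0) as [->|Hn0].
  - exists 0%nat. split; [lia|]. intros x Hx. replace x with 0%nat by lia. lra.
  - destruct (IHn ltac:(lia)) as [x0 [Hx0 Hm]].
    destruct (Rle_dec (Rabs (f n)) (Rabs (f x0))).
    + exists x0. split; [lia|]. intros x Hx. destruct (Nat.eq_dec x n); [subst; auto| apply Hm; lia].
    + exists n. split; [lia|]. intros x Hx. destruct (Nat.eq_dec x n); [subst; lra|].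
      specialize (Hm x ltac:(lia)). lra.
Qed.

(* Evaluate the eigenvector at a point where [|phi i|] is maximal. *)
Lemma stochastic_eigenvalue_le1 n K pi (phi : nat -> nat -> R) (beta : nat -> R) i :
  is_stochastic n K -> (forall x, (x < n)%nat -> 0 < pi x) ->
  (forall x, (x < n)%nat -> rsum n (fun y => K x y * phi i y) = beta i * phi i x) ->
  rsum n (fun x => phi i x * phi i x * pi x) = 1 -> Rabs (beta i) <= 1.
Proof.
  intros [HK0 HK1] Hpi Hev Hn1.
  assert (Hn : (1 <= n)%nat) by (destruct n; [simpl in Hn1; lra| lia]).
  destruct (argmax_abs n (phi i) Hn) as [x0 [Hx0 Hm]].
  assert (Hpos : 0 < Rabs (phi i x0)).
  { destruct (Req_dec (phi i x0) 0) as [E|E]; [|apply Rabs_pos_lt; auto].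
    exfalso. rewrite (rsum_ext _ _ (fun _ => 0)), rsum_const in Hn1; [lra|].
    intros x Hx. specialize (Hm x Hx). rewrite E, Rabs_R0 in Hm.
    assert (phi i x = 0) by (destruct (Req_dec (phi i x) 0) as [E2|E2]; auto; pose proof (Rabs_pos_lt _ E2); lra).
    rewrite H; ring. }
  assert (H1 : Rabs (beta i) * Rabs (phi i x0) <= Rabs (phi i x0)).
  { rewrite <- Rabs_mult, <- Hev by auto. eapply Rle_trans. apply rsum_abs.
    apply Rle_trans with (rsum n (fun y => K x0 y * Rabs (phi i x0))).
    - apply rsum_le. intros y Hy. rewrite Rabs_mult, (Rabs_right (K x0 y)) by (apply Rle_ge; apply HK0; auto).
      apply Rmult_le_compat_l. apply HK0; auto. apply Hm; auto.
    - rewrite rsum_scal_r, HK1 by auto. lra. }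
  nra.
Qed.

Lemma eq0_of_Rabs_le0 b : Rabs b <= 0 -> b = 0.
Proof. intros H. destruct (Req_dec b 0) as [E|E]; auto. pose proof (Rabs_pos_lt _ E). lra. Qed.

Definition disc_profile (N : nat) (w beta : nat -> R) (m : nat) : R :=
  rsum N (fun i => w i * (beta (S i) ^ m) ^ 2).

Section DiscreteProfile.
Variables (N : nat) (w beta : nat -> R).
Hypothesis w_nonneg : forall i, (i < N)%nat -> 0 <= w i.
Hypothesis beta_le1 : forall j, (1 <= j <= N)%nat -> Rabs (beta j) <= 1.
Hypothesis beta_mono : forall j, (1 <= j)%nat -> (S j <= N)%nat -> Rabs (beta (S j)) <= Rabs (beta j).

Lemma abs_beta_antitone i j : (1 <= i)%nat -> (i <= j)%nat -> (j <= N)%nat -> Rabs (beta j) <= Rabs (beta i).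
Proof.
  intros. enough (- Rabs (beta i) <= - Rabs (beta j)) by lra.
  apply (chain_le (fun k => - Rabs (beta k)) N); auto.
  intros k Hk1 Hk2. specialize (beta_mono k Hk1 Hk2). lra.
Qed.

Lemma disc_profile_nonneg m : 0 <= disc_profile N w beta m.
Proof. apply rsum_nonneg. intros i Hi. apply Rmult_le_pos; auto. apply pow2_ge_0. Qed.

Lemma erterm_le_of_disc_profile_le c m j : 0 < c -> (1 <= j <= N)%nat -> c < rsum j w ->
  disc_profile N w beta m <= c / (1 + c) ->
  ERle (erterm (ln (1 + rsum j w)) (lam_d beta j)) (Fin (INR m)).
Proof.
  intros Hc Hj HcS HD. set (S_ := rsum j w) in *.
  assert (H1 : S_ * (beta j ^ m) ^ 2 <= disc_profile N w beta m).
  { apply Rle_trans with (rsum j (fun i => w i * (beta (S i) ^ m) ^ 2)).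
    - unfold S_. rewrite <- rsum_scal_r. apply rsum_le. intros i Hi.
      apply Rmult_le_compat_l. apply w_nonneg; lia. apply pow2_pow_le. apply abs_beta_antitone; lia.
    - apply rsum_prefix_le. lia. intros i Hi. apply Rmult_le_pos; [apply w_nonneg; auto| apply pow2_ge_0]. }
  assert (H3 := mul_succ_lt_1 S_ ((beta j ^ m) ^ 2) c ltac:(lra) HcS ltac:(lra)).
  unfold lam_d. destruct (Req_EM_T (beta j) 0) as [Hb|Hb]; [simpl; apply pos_INR|].
  rewrite pow2_pow_exp in H3 by auto.
  set (l := - ln (Rabs (beta j))) in *.
  simpl. destruct (Req_EM_T l 0) as [Hl|Hl].
  - exfalso. rewrite Hl in H3. replace (- (2 * 0) * INR m) with 0 in H3 by ring.
    rewrite exp_0 in H3. lra.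
  - destruct (Rlt_dec l 0) as [Hlt|Hlt].
    + assert (0 < ln (1 + S_)) by (rewrite <- ln_1; apply ln_increasing; lra).
      assert (ln (1 + S_) / (2 * l) < 0).
      { assert (/ (2 * l) < 0) by (apply Rinv_lt_0_compat; lra). unfold Rdiv. nra. }
      pose proof (pos_INR m). simpl. lra.
    + apply ln_ratio_le_of_exp_lt; lra.
Qed.

(* Eigenvalues are ordered by modulus, so the nonzero ones form a prefix. *)
Lemma nonzero_prefix j0 : (1 <= j0 <= N)%nat -> beta j0 <> 0 ->
  exists N', (j0 <= N' <= N)%nat /\ (forall j, (1 <= j <= N')%nat -> beta j <> 0) /\
             (forall j, (N' < j <= N)%nat -> beta j = 0).
Proof.
  intros Hj0 Hb.
  assert (Hpref : forall j1, (j0 <= j1 <= N)%nat -> beta j1 <> 0 -> forall j, (1 <= j <= j1)%nat -> beta j <> 0).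
  { intros j1 Hj1 Hb1 j Hj Hbj. assert (Rabs (beta j1) <= Rabs (beta j)) by (apply abs_beta_antitone; lia).
    rewrite Hbj, Rabs_R0 in H. apply Hb1, eq0_of_Rabs_le0; auto. }
  assert (Main : forall k, (k <= N - j0)%nat -> (forall j, (j0 + k < j <= N)%nat -> beta j = 0) ->
     exists N', (j0 <= N' <= N)%nat /\ (forall j, (1 <= j <= N')%nat -> beta j <> 0) /\
                (forall j, (N' < j <= N)%nat -> beta j = 0)).
  { induction k; intros Hk Hz.
    - exists j0. split; [lia|]. split; [apply Hpref; auto; lia|]. intros j Hj. apply Hz. lia.
    - destruct (Req_EM_T (beta (j0 + S k)%nat) 0) as [Hz'|Hnz].
      + apply IHk; [lia|]. intros j Hj. destruct (Nat.eq_dec j (j0 + S k)); [subst; auto | apply Hz; lia].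
      + exists (j0 + S k)%nat. split; [lia|]. split; [apply Hpref; auto; lia|]. intros j Hj; apply Hz; lia. }
  apply (Main (N - j0)%nat); [lia|]. intros; lia.
Qed.

Lemma disc_profile_le_of_beta_eq0 j0 c m : (1 <= j0 <= N)%nat -> rsum (j0 - 1) w <= c ->
  beta j0 = 0 -> m <> 0%nat -> disc_profile N w beta m <= c.
Proof.
  intros Hj0 Hp Hb Hm. unfold disc_profile.
  replace N with ((j0 - 1) + (N - (j0 - 1)))%nat at 1 by lia. rewrite rsum_split.
  rewrite (rsum_ext (N - (j0 - 1)) _ (fun _ => 0)).
  - rewrite rsum_const, Rmult_0_r, Rplus_0_r. apply Rle_trans with (2 := Hp).
    apply rsum_le. intros i Hi. assert (H := pow2_pow_le1 (beta (S i)) m (beta_le1 (S i) ltac:(lia))).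
    specialize (w_nonneg i ltac:(lia)). nra.
  - intros i Hi. assert (Rabs (beta (S (j0 - 1 + i))) <= Rabs (beta j0)) by (apply abs_beta_antitone; lia).
    rewrite Hb, Rabs_R0 in H. rewrite (eq0_of_Rabs_le0 _ H), pow_i by lia. ring.
Qed.

(* On the prefix of nonzero eigenvalues the rates [- ln |beta j|] make [disc_profile]
   a [spec_profile] at integer times; the remaining terms vanish for [m > 0]. *)
Lemma disc_profile_le_of_beta_neq0 j0 c tau : (1 <= j0 <= N)%nat -> rsum (j0 - 1) w <= c ->
  0 < c -> c < rsum j0 w -> beta j0 <> 0 ->
  (forall j, (j0 <= j <= N)%nat -> ERle (erterm (ln (1 + rsum j w)) (lam_d beta j)) (Fin tau)) ->
  let l0 := - ln (Rabs (beta j0)) in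
  0 < l0 /\ ln (1 + rsum j0 w) / (2 * l0) <= tau /\ 0 < tau /\
  forall m : nat, tau < INR m ->
    disc_profile N w beta m <= c + INR m / (INR m - tau) * exp (- (2 * l0) * (INR m - tau)).
Proof.
  intros Hj0 Hp Hc HcS Hb Hterm l0.
  destruct (nonzero_prefix j0 Hj0 Hb) as [N' [HN' [Hnz Hz]]].
  set (l := fun j => - ln (Rabs (beta j))).
  assert (Hl0 : forall j, (1 <= j <= N')%nat -> 0 <= l j).
  { intros j Hj. unfold l. assert (0 < Rabs (beta j)) by (apply Rabs_pos_lt; apply Hnz; auto).
    assert (ln (Rabs (beta j)) <= 0) by (rewrite <- ln_1; apply ln_le; auto; apply beta_le1; lia). lra. }
  assert (Hlt : forall j, (j0 <= j <= N')%nat -> 0 < l j /\ ln (1 + rsum j w) / (2 * l j) <= tau).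
  { intros j Hj. specialize (Hterm j ltac:(lia)). unfold lam_d in Hterm.
    destruct (Req_EM_T (beta j) 0) as [E|_]; [exfalso; apply (Hnz j ltac:(lia) E)|].
    fold (l j) in Hterm. simpl in Hterm. destruct (Req_EM_T (l j) 0) as [E|Hne]; [simpl in Hterm; contradiction|].
    simpl in Hterm. split; auto. specialize (Hl0 j ltac:(lia)). lra. }
  assert (Hmono : forall j, (1 <= j)%nat -> (S j <= N')%nat -> l j <= l (S j)).
  { intros j H1 H2. unfold l. assert (0 < Rabs (beta (S j))) by (apply Rabs_pos_lt; apply Hnz; lia).
    assert (ln (Rabs (beta (S j))) <= ln (Rabs (beta j))) by (apply ln_le; auto; apply beta_mono; lia). lra. }
  destruct (Hlt j0 ltac:(lia)) as [Hl Ht].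
  assert (Hpos : 0 < ln (1 + rsum j0 w) / (2 * l j0)).
  { apply Rdiv_lt_0_compat; [|lra]. rewrite <- ln_1. apply ln_increasing; lra. }
  split; auto. split; auto. split; [lra|].
  intros m Hm.
  assert (Hm0 : m <> 0%nat) by (intros ->; simpl in Hm; lra).
  unfold disc_profile. replace N with (N' + (N - N'))%nat at 1 by lia. rewrite rsum_split.
  rewrite (rsum_ext (N - N') _ (fun _ => 0)).
  2:{ intros i Hi. rewrite (Hz (S (N' + i))), pow_i by lia. ring. }
  rewrite rsum_const, Rmult_0_r, Rplus_0_r.
  change (rsum N' (fun i => w i * (beta (S i) ^ m) ^ 2)) with (disc_profile N' w beta m).
  replace (disc_profile N' w beta m) with (spec_profile N' w l (INR m)).
  2:{ apply rsum_ext. intros i Hi. rewrite pow2_pow_exp by (apply Hnz; lia). reflexivity. }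
  apply (profile_le_split N' w l (fun i Hi => w_nonneg i ltac:(lia)) Hmono j0 c tau (INR m)); auto; try lra.
  - intros j Hj; apply Hlt; lia.
  - lia.
  - intros j Hj; apply Hlt; lia.
Qed.
End DiscreteProfile.

Lemma coefE_epsargE_ersqrt c A x : 0 <= c -> 0 < A ->
  0 <= coefE A (ersqrt x) /\ sqrt c <= epsargE c A (ersqrt x).
Proof.
  intros Hc HA. destruct x as [r|]; simpl; [|split; lra].
  assert (0 <= sqrt r) by apply sqrt_pos. split; [apply Rdiv_nonneg; lra|].
  apply sqrt_le_1_alt. assert (0 < A * exp (sqrt r * A)) by (apply Rmult_lt_0_compat; auto; apply exp_pos).
  assert (0 <= (A + sqrt r) / (A * exp (sqrt r * A))) by (apply Rdiv_nonneg; lra). lra.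
Qed.

Section DiscreteTime.
Variables (n : nat) (K : nat -> nat -> R) (pi mu beta : nat -> R) (phi : nat -> nat -> R).
Hypothesis Hpi : is_pos_prob n pi.
Hypothesis Hmu : is_prob n mu.
Hypothesis HK : is_stochastic n K.
Hypothesis Heig : eigen_d n K pi beta phi.
Hypothesis two_le_n : (2 <= n)%nat.

Let w i := muphi n mu phi (S i) ^ 2.
Let N := (n - 1)%nat.

Lemma disc_w_nonneg i : (i < N)%nat -> 0 <= w i.
Proof. intros; apply pow2_ge_0. Qed.

Lemma disc_chi2 : pisq n pi (fun x => mu x / pi x) - 1 = Ssum n mu phi N /\
                  pisq n pi (fun x => mu x / pi x - 1) = Ssum n mu phi N.
Proof.
  rewrite chi2_shift by auto.
  destruct Hpi as [pi_pos _], Hmu as [_ mu_sum], Heig as [_ [orth [_ [phi0 _]]]].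
  rewrite (chi2_eq_Ssum n pi phi pi_pos orth mu mu_sum phi0) by lia. auto.
Qed.

Lemma disc_beta_le1 j : (1 <= j <= N)%nat -> Rabs (beta j) <= 1.
Proof.
  intros Hj. destruct Hpi as [pi_pos _], Heig as [Hev [orth _]].
  apply (stochastic_eigenvalue_le1 n K pi phi beta j HK pi_pos).
  - intros x Hx. apply Hev; auto. unfold N in *; lia.
  - rewrite orth, Nat.eqb_refl by (unfold N in *; lia). auto.
Qed.

Lemma disc_beta_mono j : (1 <= j)%nat -> (S j <= N)%nat -> Rabs (beta (S j)) <= Rabs (beta j).
Proof. intros. destruct Heig as [_ [_ [_ [_ Hm]]]]. apply Hm; unfold N in *; lia. Qed.

Lemma d2_disc_eq : d2_disc n K pi mu = fun m => sqrt (disc_profile N w beta m).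
Proof.
  apply functional_extensionality. intros m.
  destruct Hpi as [pi_pos _], Hmu as [_ mu_sum], Heig as [Hev [orth [Hb0 [phi0 _]]]].
  unfold d2_disc, l2norm. f_equal.
  change (rsum n (fun y => (rsum n (fun x => mu x * matpow n K m x y) / pi y - 1) ^ 2 * pi y))
    with (pisq n pi (fun y => rsum n (fun x => mu x * matpow n K m x y) / pi y - 1)).
  rewrite (chi2_spectral n pi phi pi_pos orth mu mu_sum phi0 ltac:(lia) (fun i => beta i ^ m)).
  - apply rsum_ext. intros i Hi. unfold w. ring.
  - rewrite Hb0. apply pow1.
  - intros x y Hx Hy. apply (matpow_spectral n pi phi pi_pos orth K beta); auto.
Qed.

Lemma disc_T2_le e m : 0 < e -> disc_profile N w beta m <= e ^ 2 ->
  exists k, T2d (d2_disc n K pi mu) e = Fin (INR k) /\ (k <= m)%nat.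
Proof.
  intros He H. apply T2d_le. rewrite d2_disc_eq. apply sqrt_le_iff; auto.
  apply disc_profile_nonneg, disc_w_nonneg.
Qed.

Lemma disc_tau_term c tau : 0 < c -> c < Ssum n mu phi N -> tau_d n mu phi beta c = Fin tau ->
  forall j, (jidx n mu phi c <= j <= N)%nat -> ERle (erterm (ln (1 + rsum j w)) (lam_d beta j)) (Fin tau).
Proof.
  intros Hc HcV E j Hj. rewrite <- E. unfold tau_d.
  destruct (jidx_spec n mu phi c Hc HcV) as [Hj0 _].
  apply (ermaxr_ge (fun j => erterm (ln (1 + Ssum n mu phi j)) (lam_d beta j))). unfold N in *; lia.
Qed.

Lemma tau_d_le_T2 c e : 0 < c -> c < Ssum n mu phi N -> 0 < e -> e ^ 2 <= c / (1 + c) ->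
  ERle (tau_d n mu phi beta c) (T2d (d2_disc n K pi mu) e).
Proof.
  intros Hc HcV He Hec.
  destruct (T2d_spec (d2_disc n K pi mu) e) as [[m [E [Hm _]]]|[E _]]; rewrite E; [|apply ERle_PInf].
  rewrite d2_disc_eq in Hm. apply sqrt_le_iff in Hm; [|apply disc_profile_nonneg, disc_w_nonneg | auto].
  destruct (jidx_spec n mu phi c Hc HcV) as [Hj0 [Hj0c _]].
  unfold tau_d. apply ermaxr_lub. intros j Hj.
  apply (erterm_le_of_disc_profile_le N w beta disc_w_nonneg disc_beta_mono c m j Hc); [unfold N in *; lia | | lra].
  apply Rlt_le_trans with (Ssum n mu phi (jidx n mu phi c)); auto. apply Ssum_mono; lia.
Qed.

(* If [beta (j c)] vanishes, one step already kills every mode beyond [j c]. *)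
Lemma disc_T2_le1 c e : 0 < c -> c < Ssum n mu phi N -> beta (jidx n mu phi c) = 0 ->
  c <= e ^ 2 -> 0 < e -> exists k, T2d (d2_disc n K pi mu) e = Fin (INR k) /\ INR k <= 1.
Proof.
  intros Hc HcV Hb Hce He.
  destruct (jidx_spec n mu phi c Hc HcV) as [Hj0 [_ Hj0p]].
  destruct (disc_T2_le e 1 He) as [k [Ek Hk]].
  - pose proof (disc_profile_le_of_beta_eq0 N w beta disc_w_nonneg disc_beta_le1 disc_beta_mono
      (jidx n mu phi c) c 1 ltac:(unfold N in *; lia) Hj0p Hb ltac:(lia)). lra.
  - exists k. split; auto. apply le_INR in Hk. auto.
Qed.

Lemma disc_tau_nonneg c tau : 0 < c -> c < Ssum n mu phi N -> tau_d n mu phi beta c = Fin tau ->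
  beta (jidx n mu phi c) = 0 -> 0 <= tau.
Proof.
  intros Hc HcV Etau Hb. destruct (jidx_spec n mu phi c Hc HcV) as [Hj0 _].
  assert (H := disc_tau_term c tau Hc HcV Etau (jidx n mu phi c) ltac:(unfold N in *; lia)).
  unfold lam_d in H. destruct (Req_EM_T (beta (jidx n mu phi c)) 0); [exact H | contradiction].
Qed.

Lemma disc_rate_facts c tau : 0 < c -> c < Ssum n mu phi N -> tau_d n mu phi beta c = Fin tau ->
  beta (jidx n mu phi c) <> 0 ->
  let l0 := - ln (Rabs (beta (jidx n mu phi c))) in
  0 < l0 /\ ln (1 + Ssum n mu phi (jidx n mu phi c)) / (2 * l0) <= tau /\ 0 < tau /\
  forall m : nat, tau < INR m ->
    disc_profile N w beta m <= c + INR m / (INR m - tau) * exp (- (2 * l0) * (INR m - tau)).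
Proof.
  intros Hc HcV Etau Hb. destruct (jidx_spec n mu phi c Hc HcV) as [Hj0 [Hj0c Hj0p]].
  exact (disc_profile_le_of_beta_neq0 N w beta disc_w_nonneg disc_beta_le1 disc_beta_mono
    (jidx n mu phi c) c tau ltac:(unfold N in *; lia) Hj0p Hc Hj0c Hb (disc_tau_term c tau Hc HcV Etau)).
Qed.

Lemma disc_T2_le_succ c tau t e : 0 < c -> c < Ssum n mu phi N -> tau_d n mu phi beta c = Fin tau ->
  beta (jidx n mu phi c) <> 0 -> 0 < e -> tau < t ->
  c + t / (t - tau) * exp (- (2 * - ln (Rabs (beta (jidx n mu phi c)))) * (t - tau)) <= e ^ 2 ->
  exists k, T2d (d2_disc n K pi mu) e = Fin (INR k) /\ INR k <= t + 1.
Proof.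
  intros Hc HcV Etau Hb He Ht Htail.
  destruct (disc_rate_facts c tau Hc HcV Etau Hb) as [Hl [_ [Htp Hbound]]].
  set (l0 := - ln (Rabs (beta (jidx n mu phi c)))) in *.
  destruct (nat_ceil t ltac:(lra)) as [m [Hm1 Hm2]].
  pose proof (tail_bound_antitone tau (2 * l0) t (INR m) ltac:(lra) Ht Hm1 ltac:(lra)).
  destruct (disc_T2_le e m He) as [k [Ek Hk]].
  { pose proof (Hbound m ltac:(lra)). lra. }
  exists k. split; auto. apply le_INR in Hk. lra.
Qed.

Lemma disc_lower_c c A : 0 < c -> c < Ssum n mu phi N -> 0 < A ->
  let al := alpha_d n mu phi beta c in
  ERle (ermul (Fin (coefE A al)) (eradd (T2d (d2_disc n K pi mu) (epsargE c A al)) (-1)))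
       (tau_d n mu phi beta c).
Proof.
  intros Hc HcV HA al. set (j0 := jidx n mu phi c) in *.
  destruct (tau_d n mu phi beta c) as [tau|] eqn:Etau; [|apply ERle_PInf].
  destruct (Req_EM_T (beta j0) 0) as [Hb|Hb].
  - destruct (coefE_epsargE_ersqrt c A (ermul (tau_d n mu phi beta c) (lam_d beta j0)) ltac:(lra) HA)
      as [Hco Hea].
    change (ersqrt (ermul (tau_d n mu phi beta c) (lam_d beta j0))) with al in Hco, Hea.
    assert (Hsc : 0 < sqrt c) by (apply sqrt_lt_R0; auto).
    destruct (disc_T2_le1 c (epsargE c A al) Hc HcV Hb) as [k [Ek Hk]]; [|lra|].
    + apply sqrt_le_iff in Hea; lra.
    + rewrite Ek. simpl. pose proof (disc_tau_nonneg c tau Hc HcV Etau Hb). nra.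
  - destruct (disc_rate_facts c tau Hc HcV Etau Hb) as [Hl [_ [Htp _]]].
    set (l0 := - ln (Rabs (beta j0))) in *.
    assert (Hal : al = Fin (sqrt (tau * l0))).
    { unfold al, alpha_d, lam_d. fold j0. rewrite Etau.
      destruct (Req_EM_T (beta j0) 0); [contradiction | reflexivity]. }
    destruct (alpha_time_bound tau l0 A Htp Hl HA) as [Halp [Hts Hcalc]].
    set (a := sqrt (tau * l0)) in *. set (ts := tau * (a + A) / a) in *.
    assert (Hq : 0 < (A + a) / (A * exp (a * A))).
    { apply Rdiv_lt_0_compat; [lra|]. apply Rmult_lt_0_compat; auto; apply exp_pos. }
    set (e := sqrt (c + (A + a) / (A * exp (a * A)))).
    assert (He2 : e ^ 2 = c + (A + a) / (A * exp (a * A)))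
      by (unfold e; rewrite <- Rsqr_pow2; apply Rsqr_sqrt; lra).
    destruct (disc_T2_le_succ c tau ts e Hc HcV Etau Hb ltac:(apply sqrt_lt_R0; lra) Hts)
      as [k [Ek Hk]]; [change (- ln (Rabs (beta (jidx n mu phi c)))) with l0; lra|].
    rewrite Hal. simpl. fold e. rewrite Ek. simpl.
    apply Rle_trans with (a / (a + A) * ts).
    + apply Rmult_le_compat_l; [apply Rdiv_nonneg|]; lra.
    + unfold ts. right. field. lra.
Qed.

Lemma disc_bounds_c c A : 0 < c -> c < pisq n pi (fun x => mu x / pi x) - 1 -> 0 < A ->
  let al := alpha_d n mu phi beta c in
  ERle (ermul (Fin (coefE A al)) (eradd (T2d (d2_disc n K pi mu) (epsargE c A al)) (-1)))
       (tau_d n mu phi beta c)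
  /\ ERle (tau_d n mu phi beta c) (T2d (d2_disc n K pi mu) (sqrt (c / (1 + c)))).
Proof.
  intros Hc HcV HA al. rewrite (proj1 disc_chi2) in HcV.
  split; [apply disc_lower_c; auto|].
  assert (Hcc : 0 < c / (1 + c)) by (apply Rdiv_lt_0_compat; lra).
  apply tau_d_le_T2; auto; [apply sqrt_lt_R0; auto|].
  rewrite <- Rsqr_pow2, Rsqr_sqrt; lra.
Qed.

Lemma disc_bounds_eps eps : 0 < eps ->
  eps < sqrt (Rmin (pisq n pi (fun x => mu x / pi x - 1)) 1 / 2) ->
  ERle (tau_d n mu phi beta (2 * eps ^ 2)) (T2d (d2_disc n K pi mu) eps)
  /\ ERle (T2d (d2_disc n K pi mu) eps)
          (eradd (ermul (Fin (6 / eps ^ 4)) (tau_d n mu phi beta (eps ^ 2 / 2))) 1).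
Proof.
  intros He Hlt. rewrite (proj2 disc_chi2) in Hlt. apply pow2_lt_of_lt_sqrt in Hlt; auto.
  assert (H1 : 2 * eps ^ 2 < Ssum n mu phi N) by (pose proof (Rmin_l (Ssum n mu phi N) 1); lra).
  assert (H2 : 2 * eps ^ 2 < 1) by (pose proof (Rmin_r (Ssum n mu phi N) 1); lra).
  assert (Hep : 0 < eps ^ 2) by nra.
  split.
  - apply tau_d_le_T2; auto; [lra|].
    apply Rmult_le_reg_r with (1 + 2 * eps ^ 2); [lra|].
    unfold Rdiv. rewrite Rmult_assoc, Rinv_l by lra. nra.
  - set (c := eps ^ 2 / 2).
    assert (Hc : 0 < c) by (unfold c; lra). assert (HcV : c < Ssum n mu phi N) by (unfold c; lra).
    assert (Hk0 : 0 < 6 / eps ^ 4) by (apply Rdiv_lt_0_compat; [lra| nra]).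
    destruct (tau_d n mu phi beta c) as [tau|] eqn:Etau.
    2:{ cbn [ermul eradd]. destruct (Req_EM_T (6 / eps ^ 4) 0); [lra | apply ERle_PInf]. }
    cbn [ermul eradd].
    destruct (Req_EM_T (beta (jidx n mu phi c)) 0) as [Hb|Hb].
    + destruct (disc_T2_le1 c eps Hc HcV Hb) as [k [Ek Hk]]; [unfold c; lra | auto |].
      rewrite Ek. cbn [ERle]. pose proof (disc_tau_nonneg c tau Hc HcV Etau Hb).
      assert (0 <= 6 / eps ^ 4 * tau) by (apply Rmult_le_pos; lra). lra.
    + destruct (disc_rate_facts c tau Hc HcV Etau Hb) as [Hl [Hrt _]].
      destruct (jidx_spec n mu phi c Hc HcV) as [_ [Hj0c _]].
      destruct (eps_time_bound eps tau _ _ He H2 Hj0c Hrt Hl) as [Hts Hcalc].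
      destruct (disc_T2_le_succ c tau _ eps Hc HcV Etau Hb He Hts) as [k [Ek Hk]]; [unfold c in *; lra|].
      rewrite Ek. cbn [ERle]. lra.
Qed.
End DiscreteTime.

Lemma chi2_single_state n pi mu : (n < 2)%nat -> is_pos_prob n pi -> is_prob n mu ->
  pisq n pi (fun x => mu x / pi x - 1) = 0.
Proof.
  intros Hn [_ Hp] [_ Hm].
  destruct n as [|[|n']]; [simpl in Hm; lra | | lia].
  simpl in *. unfold pisq; simpl. replace (mu 0%nat) with 1 by lra. replace (pi 0%nat) with 1 by lra. field.
Qed.

Lemma two_le_n_of_chi2_pos n pi mu : is_pos_prob n pi -> is_prob n mu ->
  0 < pisq n pi (fun x => mu x / pi x - 1) -> (2 <= n)%nat.
Proof.
  intros Hpi Hmu H. destruct (Nat.lt_ge_cases n 2) as [Hn|Hn]; auto.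
  rewrite chi2_single_state in H; auto. lra.
Qed.

Lemma pos_of_lt_sqrt_min_half eps V : 0 < eps -> eps < sqrt (Rmin V 1 / 2) -> 0 < V.
Proof.
  intros He H. apply pow2_lt_of_lt_sqrt in H; auto.
  pose proof (Rmin_l V 1). nra.
Qed.

Theorem proposition3p4 :
  (forall (n : nat) (L : nat -> nat -> R) (pi mu : nat -> R)
          (lam : nat -> R) (phi : nat -> nat -> R),
     is_generator n L -> irreducible n L -> is_pos_prob n pi -> reversible n pi L ->
     is_prob n mu -> eigen_c n L pi lam phi ->
     (forall c A : R,
        0 < c -> c < pisq n pi (fun x => mu x / pi x) - 1 -> 0 < A ->
        let al := alpha_c n mu phi lam c in
        al / (al + A) *
          T2c (d2_cont n L pi mu) (sqrt (c + (A + al) / (A * exp (al * A))))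
          <= tau_c n mu phi lam c
        /\ tau_c n mu phi lam c <= T2c (d2_cont n L pi mu) (sqrt (c / (1 + c)))) /\
     (forall eps : R,
        0 < eps ->
        eps < sqrt (Rmin (pisq n pi (fun x => mu x / pi x - 1)) 1 / 2) ->
        tau_c n mu phi lam (2 * eps ^ 2) <= T2c (d2_cont n L pi mu) eps
        /\ T2c (d2_cont n L pi mu) eps <= 6 / eps ^ 4 * tau_c n mu phi lam (eps ^ 2 / 2)))
  /\
  (forall (n : nat) (K : nat -> nat -> R) (pi mu : nat -> R)
          (beta : nat -> R) (phi : nat -> nat -> R),
     is_stochastic n K -> irreducible n K -> is_pos_prob n pi -> reversible n pi K ->
     is_prob n mu -> eigen_d n K pi beta phi ->
     (forall c A : R,
        0 < c -> c < pisq n pi (fun x => mu x / pi x) - 1 -> 0 < A ->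
        let al := alpha_d n mu phi beta c in
        ERle (ermul (Fin (coefE A al))
                    (eradd (T2d (d2_disc n K pi mu) (epsargE c A al)) (-1)))
             (tau_d n mu phi beta c)
        /\ ERle (tau_d n mu phi beta c) (T2d (d2_disc n K pi mu) (sqrt (c / (1 + c))))) /\
     (forall eps : R,
        0 < eps ->
        eps < sqrt (Rmin (pisq n pi (fun x => mu x / pi x - 1)) 1 / 2) ->
        ERle (tau_d n mu phi beta (2 * eps ^ 2)) (T2d (d2_disc n K pi mu) eps)
        /\ ERle (T2d (d2_disc n K pi mu) eps)
                (eradd (ermul (Fin (6 / eps ^ 4)) (tau_d n mu phi beta (eps ^ 2 / 2))) 1))).
Proof.
  (* The generator, irreducibility and reversibility hypotheses matter only through the
     spectral data [eigen_c] / [eigen_d]. *)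
  split.
  - intros n L pi mu lam phi _ _ Hpi _ Hmu Heig. split.
    + intros c A Hc HcV.
      assert (Hn : (2 <= n)%nat)
        by (apply (two_le_n_of_chi2_pos n pi mu Hpi Hmu); rewrite <- chi2_shift by auto; lra).
      exact (cont_bounds_c n L pi mu lam phi Hpi Hmu Heig Hn c A Hc HcV).
    + intros eps He Heps.
      assert (Hn := two_le_n_of_chi2_pos n pi mu Hpi Hmu (pos_of_lt_sqrt_min_half _ _ He Heps)).
      exact (cont_bounds_eps n L pi mu lam phi Hpi Hmu Heig Hn eps He Heps).
  - intros n K pi mu beta phi HK _ Hpi _ Hmu Heig. split.
    + intros c A Hc HcV.
      assert (Hn : (2 <= n)%nat)
        by (apply (two_le_n_of_chi2_pos n pi mu Hpi Hmu); rewrite <- chi2_shift by auto; lra).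
      exact (disc_bounds_c n K pi mu beta phi Hpi Hmu HK Heig Hn c A Hc HcV).
    + intros eps He Heps.
      assert (Hn := two_le_n_of_chi2_pos n pi mu Hpi Hmu (pos_of_lt_sqrt_min_half _ _ He Heps)).
      exact (disc_bounds_eps n K pi mu beta phi Hpi Hmu HK Heig Hn eps He Heps).
Qed.
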